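(* Let $\mathcal{F}=(f_s:I_s\to[n]\mid s\in S)$ be an $S$-claw in $\Delta$. The image of $\mathcal{F}$ under the canonical functor $\Delta\to\Lambda$ is strongly biCartesian in $\Lambda$ (i.e. it extends to a strongly Cartesian $S$-cube in $\Lambda$, and this cube is also strongly coCartesian) if and only if $\mathcal{F}$ is cyclically compatible.
   Context: $\Delta$: simplex category of nonempty finite linear orders $[n]=\{0<\dots<n\}$, weakly monotone maps. $\Lambda$: Connes' cyclic category (objects the cyclic sets $\langle n\rangle=(\mathbb{Z}/(n+1),+1)$); the canonical functor $\Delta\to\Lambda$, $[n]\mapsto\langle n\rangle$, identifies $\Delta$ with the slice $\Lambda_{/\langle0\rangle}$ and is the forgetful functor. An $S$-cube is a functor $\mathcal{P}(S)^{\mathrm{op}}\to\mathcal{D}$ from the opposite of the subset poset of $S$; it is strongly Cartesian / strongly coCartesian if all squares $Q(T\cup\{s,s'\})\to Q(T\cup\{s\}),Q(T\cup\{s'\})\to Q(T)$ ($s\ne s'\notin T$) are pullbacks / pushouts. An $S$-claw on $[n]$ is a family of morphisms $f_s:I_s\to[n]$. It is compatible if (BC1) for each $i\in[n]$ at most one $s$ has $f_s^{-1}\{i\}$ not a singleton, and (BC2) for each $0<i\le n$ at most one $s$ has $\{i-1,i\}\not\subseteq f_s(I_s)$. It is cyclically compatible if it is compatible and all but at most one $s\in S$ satisfy $\{0,n\}\subseteq f_s(I_s)$. *)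

(* Connes' cyclic category Lambda, modelled concretely:
   object <n> (n : nat) = Z/(n+1); a morphism <m> -> <n> is an equivalence
   class of nondecreasing maps g : Z -> Z with g (x + (m+1)) = g x + (n+1),
   two such maps being identified iff they differ by a multiple of (n+1). *)
From mathcomp Require Import all_boot all_algebra.
Set Implicit Arguments. Unset Strict Implicit. Unset Printing Implicit Defensive.
Import GRing.Theory Num.Theory.
Local Open Scope ring_scope.

Definition lam_hom (m n : nat) (g : int -> int) : Prop :=
  (forall x y : int, x <= y -> g x <= g y) /\
  (forall x : int, g (x + (m.+1)%:Z) = g x + (n.+1)%:Z).

Definition lam_eq (n : nat) (g h : int -> int) : Prop :=
  exists k : int, forall x : int, h x = g x + k * (n.+1)%:Z.

Definition lam_pullback (a b c d : nat) (p q r t : int -> int) : Prop :=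
  lam_eq d (r \o p) (t \o q) /\
  forall (x : nat) (u v : int -> int),
    lam_hom x b u -> lam_hom x c v -> lam_eq d (r \o u) (t \o v) ->
    exists w : int -> int,
      [/\ lam_hom x a w, lam_eq b (p \o w) u, lam_eq c (q \o w) v &
          forall w' : int -> int, lam_hom x a w' -> lam_eq b (p \o w') u ->
            lam_eq c (q \o w') v -> lam_eq a w w'].

Definition lam_pushout (a b c d : nat) (p q r t : int -> int) : Prop :=
  lam_eq d (r \o p) (t \o q) /\
  forall (x : nat) (u v : int -> int),
    lam_hom b x u -> lam_hom c x v -> lam_eq x (u \o p) (v \o q) ->
    exists w : int -> int,
      [/\ lam_hom d x w, lam_eq x (w \o r) u, lam_eq x (w \o t) v &
          forall w' : int -> int, lam_hom d x w' -> lam_eq x (w' \o r) u ->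
            lam_eq x (w' \o t) v -> lam_eq x w w'].

(* an S-cube in Lambda: a functor P(S)^op -> Lambda; T \subset T' gives
   the arrow mor T T' : ob T' -> ob T *)
Definition lam_cube (S : finType) (ob : {set S} -> nat)
    (mor : {set S} -> {set S} -> int -> int) : Prop :=
  [/\ forall T T' : {set S}, T \subset T' -> lam_hom (ob T') (ob T) (mor T T'),
      forall T : {set S}, lam_eq (ob T) id (mor T T) &
      forall T T' T'' : {set S}, T \subset T' -> T' \subset T'' ->
        lam_eq (ob T) (mor T T' \o mor T' T'') (mor T T'')].

Definition strongly_cartesian (S : finType) (ob : {set S} -> nat)
    (mor : {set S} -> {set S} -> int -> int) : Prop :=
  forall (T : {set S}) (s s' : S), s != s' -> s \notin T -> s' \notin T ->
    lam_pullback (ob (s |: (s' |: T))) (ob (s |: T)) (ob (s' |: T)) (ob T)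
      (mor (s |: T) (s |: (s' |: T))) (mor (s' |: T) (s |: (s' |: T)))
      (mor T (s |: T)) (mor T (s' |: T)).

Definition strongly_cocartesian (S : finType) (ob : {set S} -> nat)
    (mor : {set S} -> {set S} -> int -> int) : Prop :=
  forall (T : {set S}) (s s' : S), s != s' -> s \notin T -> s' \notin T ->
    lam_pushout (ob (s |: (s' |: T))) (ob (s |: T)) (ob (s' |: T)) (ob T)
      (mor (s |: T) (s |: (s' |: T))) (mor (s' |: T) (s |: (s' |: T)))
      (mor T (s |: T)) (mor T (s' |: T)).

Definition delta_hom (m n : nat) (f : 'I_m.+1 -> 'I_n.+1) : Prop :=
  forall i j : 'I_m.+1, (i <= j)%N -> (f i <= f j)%N.

(* the canonical functor Delta -> Lambda on morphisms:
   x = q (m+1) + r  |->  q (n+1) + f r *)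
Definition delta_to_lam (m n : nat) (f : 'I_m.+1 -> 'I_n.+1) : int -> int :=
  fun x => ((f (inord (absz (modz x (m.+1)%:Z))) : nat)%:Z
            + divz x (m.+1)%:Z * (n.+1)%:Z).

Definition extends_claw (S : finType) (n : nat) (m : S -> nat)
    (f : forall s : S, 'I_(m s).+1 -> 'I_n.+1) (ob : {set S} -> nat)
    (mor : {set S} -> {set S} -> int -> int) : Prop :=
  ob set0 = n /\
  forall s : S, ob [set s] = m s /\
                lam_eq n (delta_to_lam (f s)) (mor set0 [set s]).

Definition at_most_one (S : finType) (P : S -> Prop) : Prop :=
  forall s s' : S, P s -> P s' -> s = s'.

Definition in_image (k n : nat) (f : 'I_k.+1 -> 'I_n.+1) (i : nat) : bool :=
  [exists j, (f j : nat) == i].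

Definition compatible (S : finType) (n : nat) (m : S -> nat)
    (f : forall s : S, 'I_(m s).+1 -> 'I_n.+1) : Prop :=
  (forall i : 'I_n.+1,
     at_most_one (fun s => #|[set j | f s j == i]| != 1%N)) /\
  (forall i : nat, (0 < i <= n)%N ->
     at_most_one (fun s => ~~ (in_image (f s) i.-1 && in_image (f s) i))).

Definition cyclically_compatible (S : finType) (n : nat) (m : S -> nat)
    (f : forall s : S, 'I_(m s).+1 -> 'I_n.+1) : Prop :=
  compatible f /\
  at_most_one (fun s => ~~ (in_image (f s) 0 && in_image (f s) n)).

(* A commuting square of such representatives is a
   pullback in Lambda when it is a fibre product of sets, and a pushout when its two legs
   are jointly surjective, identify two points only over the image of the other leg, and
   every gap between a value of one leg and a value of the other contains a value of the
   composite.

   Necessity.  For s <> s' the face of the cube over {s, s'} is a biCartesian square whose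
   legs are the images of f_s and f_s'.  Testing the pullback against maps out of <0> shows
   that f_s and f_s' cannot both fold a common value; testing the pushout against small
   perturbations of the legs shows that no value is missed by both maps, that a value
   missed by one map has a single preimage under the other, and that no edge {i, i+1} of
   the cycle [n] (including {n, 0}) is left uncovered by both maps.  This is BC1, BC2 and
   the cyclic condition.

   Sufficiency.  Put at T the iterated fibre product Q_T of the f_s, s in T, over [n].
   By BC1 it is a chain, hence a copy of some [N_T]; restrictions give the maps of the
   cube.  BC2 and the cyclic condition say that each edge of the cycle [n] is covered by
   all maps but at most one, so walking around the cycle from a level hit by all f_u
   (u in U) to the first level hit by f_s stays hit by all of them.  This makes every Q_T
   nonempty and fills the gaps required by the pushout criterion in each face, while each
   face is a fibre product of chains and hence a pullback. *)

From mathcomp Require Import all_boot all_order all_algebra zify.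
From Stdlib Require Import ClassicalEpsilon.
Set Implicit Arguments. Unset Strict Implicit. Unset Printing Implicit Defensive.
Import GRing.Theory Num.Theory Order.TTheory.

Local Open Scope ring_scope.

(** * Representatives of morphisms of Lambda *)

Lemma lam_hom_shift (a b : nat) (g : int -> int) : lam_hom a b g ->
  forall (j x : int), g (x + j * a.+1%:Z) = g x + j * b.+1%:Z.
Proof.
case=> _ hg.
have hn (j : nat) x : g (x + j%:Z * a.+1%:Z) = g x + j%:Z * b.+1%:Z.
  elim: j x => [|j IH] x; first by rewrite !mul0r !addr0.
  have -> : x + j.+1%:Z * a.+1%:Z = x + j%:Z * a.+1%:Z + a.+1%:Z by lia.
  by rewrite hg IH; lia.
case=> j x; first exact: hn.
have := hn j.+1 (x - j.+1%:Z * a.+1%:Z).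
by rewrite subrK NegzE !mulNr => ->; rewrite addrK.
Qed.

Lemma mulzS_inj (n : nat) (k k' : int) : k * n.+1%:Z = k' * n.+1%:Z -> k = k'.
Proof. by apply: mulIf. Qed.

Lemma lam_hom_comp (a b c : nat) (g h : int -> int) :
  lam_hom a b g -> lam_hom b c h -> lam_hom a c (h \o g).
Proof.
move=> [gmono gper] [hmono hper]; split => [x y xy|x] /=; last by rewrite gper hper.
exact/hmono/gmono.
Qed.

Lemma lam_eq_sym (n : nat) (g h : int -> int) : lam_eq n g h -> lam_eq n h g.
Proof. by move=> [k hk]; exists (- k) => x; rewrite hk mulNr addrK. Qed.

Lemma lam_eq_trans (n : nat) (g h l : int -> int) :
  lam_eq n g h -> lam_eq n h l -> lam_eq n g l.
Proof. by move=> [k hk] [k' hk']; exists (k + k') => x; rewrite hk' hk mulrDl addrA. Qed.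

Lemma lam_eq_refl (n : nat) (g h : int -> int) : g =1 h -> lam_eq n g h.
Proof. by move=> gh; exists 0 => x; rewrite mul0r addr0 gh. Qed.

Lemma lam_hom_eq (a b : nat) (g h : int -> int) :
  lam_eq b g h -> lam_hom a b g -> lam_hom a b h.
Proof.
move=> [k hk] [gmono gper]; split => [x y /gmono|x]; first by rewrite !hk lerD2r.
by rewrite !hk gper addrAC.
Qed.

Lemma int_cyc_decomp (M : nat) (x : int) :
  exists k (r : 'I_M.+1), x = k * M.+1%:Z + (r : nat)%:Z.
Proof.
have r_ge0 : 0 <= (x %% M.+1%:Z)%Z by rewrite modz_ge0.
have r_lt : (`|(x %% M.+1%:Z)%Z|%N < M.+1)%N.
  by rewrite -ltz_nat gez0_abs // ltz_pmod.
by exists (x %/ M.+1%:Z)%Z, (Ordinal r_lt); rewrite /= gez0_abs // -divz_eq.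
Qed.

Lemma int_cyc_decompK (M : nat) (k : int) (r : 'I_M.+1) :
  ((k * M.+1%:Z + (r : nat)%:Z) %/ M.+1%:Z)%Z = k /\
  `|((k * M.+1%:Z + (r : nat)%:Z) %% M.+1%:Z)%Z|%N = r.
Proof.
have r_bd : 0 <= (r : nat)%:Z < M.+1%:Z by rewrite ltz_nat ltn_ord.
by rewrite divzMDl // divz_small ?addr0 // modzMDl modz_small.
Qed.

Lemma int_cyc_decomp_inj (M : nat) (k k' : int) (r r' : 'I_M.+1) :
  k * M.+1%:Z + (r : nat)%:Z = k' * M.+1%:Z + (r' : nat)%:Z -> k = k' /\ r = r'.
Proof.
move=> e; have [dk mr] := int_cyc_decompK k r; have [dk' mr'] := int_cyc_decompK k' r'.
by split; [rewrite -dk -dk' e | apply: val_inj; rewrite /= -mr -mr' e].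
Qed.

Lemma int_cyc_decomp_le (M : nat) (k k' : int) (r r' : 'I_M.+1) :
  (k * M.+1%:Z + (r : nat)%:Z <= k' * M.+1%:Z + (r' : nat)%:Z) =
  (k < k') || ((k == k') && (r <= r')%N).
Proof.
have := ltn_ord r; have := ltn_ord r'; move: (r : nat) (r' : nat) => x y hy hx.
by apply/idP/idP => [|/orP [|/andP [/eqP -> ]]] h; nia.
Qed.

Lemma int_cyc_decomp_lt (M : nat) (k k' : int) (r r' : 'I_M.+1) :
  (k * M.+1%:Z + (r : nat)%:Z < k' * M.+1%:Z + (r' : nat)%:Z) =
  (k < k') || ((k == k') && (r < r')%N).
Proof.
have := ltn_ord r; have := ltn_ord r'; move: (r : nat) (r' : nat) => x y hy hx.
by apply/idP/idP => [|/orP [|/andP [/eqP -> ]]] h; nia.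
Qed.

Section DeltaToLambda.
Variables (a b : nat).
Implicit Types (phi psi : 'I_a.+1 -> 'I_b.+1).

Lemma delta_to_lamE phi (k : int) (r : 'I_a.+1) :
  delta_to_lam phi (k * a.+1%:Z + (r : nat)%:Z) = k * b.+1%:Z + (phi r : nat)%:Z.
Proof.
have [dk mr] := int_cyc_decompK k r.
by rewrite /delta_to_lam dk mr inord_val addrC.
Qed.

Lemma delta_to_lam_ord phi (r : 'I_a.+1) :
  delta_to_lam phi (r : nat)%:Z = (phi r : nat)%:Z.
Proof. by have := delta_to_lamE phi 0 r; rewrite !mul0r !add0r. Qed.

Lemma delta_to_lam_hom phi : delta_hom phi -> lam_hom a b (delta_to_lam phi).
Proof.
move=> phi_mono; split => [x y|x].
  have [k [r ->]] := int_cyc_decomp a x; have [k' [r' ->]] := int_cyc_decomp a y.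
  rewrite !delta_to_lamE !int_cyc_decomp_le => /orP [->//|/andP [/eqP -> rr']].
  by rewrite eqxx phi_mono ?orbT.
have [k [r ->]] := int_cyc_decomp a x.
rewrite -[_ + a.+1%:Z]addrAC -{2}[a.+1%:Z]mul1r -mulrDl !delta_to_lamE.
by rewrite mulrDl mul1r addrAC.
Qed.

Lemma delta_to_lam_eq phi psi : phi =1 psi -> delta_to_lam phi =1 delta_to_lam psi.
Proof. by move=> e x; rewrite /delta_to_lam e. Qed.

End DeltaToLambda.

Lemma delta_to_lam_comp (a b c : nat) (phi : 'I_a.+1 -> 'I_b.+1)
    (psi : 'I_b.+1 -> 'I_c.+1) (x : int) :
  delta_to_lam (psi \o phi) x = delta_to_lam psi (delta_to_lam phi x).
Proof. by have [k [r ->]] := int_cyc_decomp a x; rewrite /= !delta_to_lamE. Qed.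

Lemma delta_to_lam_id (a : nat) : delta_to_lam (@id 'I_a.+1) =1 id.
Proof. by move=> x; have [k [r ->]] := int_cyc_decomp a x; rewrite delta_to_lamE. Qed.

(* The vertices [last_rank T] of the cube built below are only propositionally equal to
   [n] and [m s]. *)
Lemma delta_to_lam_cast (a b a' b' : nat) (phi : 'I_a.+1 -> 'I_b.+1)
    (psi : 'I_a'.+1 -> 'I_b'.+1) :
  a' = a -> b' = b -> (forall r : 'I_a.+1, (psi (inord r) : nat) = phi r) ->
  delta_to_lam psi =1 delta_to_lam phi.
Proof.
move=> ea eb e x; subst a' b'.
by have [k [r ->]] := int_cyc_decomp a x; rewrite !delta_to_lamE -e inord_val.
Qed.

(** * Pullback and pushout criteria in Lambda *)

Section LambdaSquare.
Variables (a b c d : nat) (p q r t : int -> int).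
Hypotheses (hp : lam_hom a b p) (hq : lam_hom a c q).
Hypotheses (hr : lam_hom b d r) (ht : lam_hom c d t).
Hypothesis commute : forall z, r (p z) = t (q z).
Hypothesis joint_lift : forall be ga, r be = t ga -> exists al, p al = be /\ q al = ga.

Section Pullback.
Hypothesis joint_inj : forall al al', p al = p al' -> q al = q al' -> al = al'.

Lemma lam_pullback_lift (x : nat) (u v : int -> int) :
  lam_hom x b u -> lam_hom x c v -> (forall z, r (u z) = t (v z)) ->
  exists w, [/\ lam_hom x a w, forall z, p (w z) = u z & forall z, q (w z) = v z].
Proof.
move=> [umono uper] [vmono vper] ruv.
have ex z : exists al, (p al == u z) && (q al == v z).
  by have [al [<- <-]] := joint_lift (ruv z); exists al; rewrite !eqxx.
pose w z := xchoose (ex z).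
have pw z : p (w z) = u z by case/andP: (xchooseP (ex z)) => /eqP.
have qw z : q (w z) = v z by case/andP: (xchooseP (ex z)) => _ /eqP.
exists w; split => //; split => [z z' zz'|z].
  rewrite leNgt; apply/negP => lt.
  have ep : p (w z') = p (w z).
    by apply: le_anti; rewrite (proj1 hp _ _ (ltW lt)) !pw umono.
  have eq : q (w z') = q (w z).
    by apply: le_anti; rewrite (proj1 hq _ _ (ltW lt)) !qw vmono.
  by move: lt; rewrite (joint_inj ep eq) ltxx.
by apply: joint_inj; rewrite (proj2 hp, proj2 hq) ?pw ?qw ?uper ?vper.
Qed.

Lemma lam_eq_of_legs (w w' : int -> int) :
  lam_eq b (p \o w) (p \o w') -> lam_eq c (q \o w) (q \o w') -> lam_eq a w w'.
Proof.
move=> [k1 /= h1] [k2 /= h2].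
have k12 : k1 = k2.
  have := congr1 r (h1 0); have := congr1 t (h2 0).
  rewrite /= (lam_hom_shift hr) (lam_hom_shift ht) -!commute => -> /addrI.
  by move/mulzS_inj.
exists k1 => z; apply: joint_inj.
  by rewrite (lam_hom_shift hp) h1.
by rewrite (lam_hom_shift hq) h2 k12.
Qed.

Lemma lam_pullback_of_fiber_product : lam_pullback a b c d p q r t.
Proof.
split; first exact: lam_eq_refl.
move=> x u v hu hv [k /= hk].
pose v' z := v z + (- k) * c.+1%:Z.
have vv' : lam_eq c v' v by exists k => z; rewrite /v' mulNr addrNK.
have tv' z : r (u z) = t (v' z).
  by rewrite (lam_hom_shift ht) (hk z) mulNr addrK.
have [w [hw pw qw]] := lam_pullback_lift hu (lam_hom_eq (lam_eq_sym vv') hv) tv'.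
have pwu : lam_eq b (p \o w) u by exact: lam_eq_refl.
have qwv : lam_eq c (q \o w) v by apply: lam_eq_trans vv'; exact: lam_eq_refl.
exists w; split => // w' hw' pw'u qw'v.
apply: lam_eq_of_legs.
  exact: lam_eq_trans pwu (lam_eq_sym pw'u).
exact: lam_eq_trans qwv (lam_eq_sym qw'v).
Qed.

End Pullback.

Section Pushout.
Hypothesis joint_surj : forall de, (exists be, r be = de) \/ (exists ga, t ga = de).
Hypothesis r_fold : forall b1 b2, r b1 = r b2 -> b1 <> b2 -> exists ga, t ga = r b1.
Hypothesis t_fold : forall g1 g2, t g1 = t g2 -> g1 <> g2 -> exists be, r be = t g1.
Hypothesis r_below_t : forall be ga, r be < t ga -> exists al, r be <= r (p al) <= t ga.
Hypothesis t_below_r : forall be ga, t ga < r be -> exists al, t ga <= r (p al) <= r be.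

Section Glue.
Variables (x : nat) (u v : int -> int).
Hypotheses (hu : lam_hom b x u) (hv : lam_hom c x v).
Hypothesis upvq : forall z, u (p z) = v (q z).

Let uv_agree be ga : r be = t ga -> u be = v ga.
Proof. by move=> /joint_lift [al [<- <-]]. Qed.

Lemma cocone_mono_r b1 b2 : r b1 <= r b2 -> u b1 <= u b2.
Proof.
move=> le12; have [//|lt] := leP b1 b2; first exact: (proj1 hu).
have e : r b1 = r b2 by apply: le_anti; rewrite le12 (proj1 hr _ _ (ltW lt)).
have [ga hga] := r_fold e (elimF eqP (gt_eqF lt)).
by rewrite (uv_agree (esym hga)) (uv_agree (etrans (esym e) (esym hga))).
Qed.

Lemma cocone_mono_t g1 g2 : t g1 <= t g2 -> v g1 <= v g2.
Proof.
move=> le12; have [//|lt] := leP g1 g2; first exact: (proj1 hv).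
have e : t g1 = t g2 by apply: le_anti; rewrite le12 (proj1 ht _ _ (ltW lt)).
have [be hbe] := t_fold e (elimF eqP (gt_eqF lt)).
by rewrite -(uv_agree hbe) (uv_agree (etrans hbe e)).
Qed.

Lemma lam_pushout_glue :
  exists w, [/\ lam_hom d x w, forall z, w (r z) = u z & forall z, w (t z) = v z].
Proof.
pose glued de y := (forall be, r be = de -> y = u be) /\ (forall ga, t ga = de -> y = v ga).
have glued_ex de : exists y, glued de y.
  case: (joint_surj de) => [[be0 <-]|[ga0 <-]].
    exists (u be0); split => [be e|ga e]; last exact: uv_agree.
    by apply: le_anti; rewrite !cocone_mono_r // e.
  exists (v ga0); split => [be e|ga e]; first by rewrite (uv_agree e).
  by apply: le_anti; rewrite !cocone_mono_t // e.
pose w de := epsilon (inhabits 0) (glued de).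
have w_spec de : glued de (w de) := epsilon_spec (inhabits 0) (glued de) (glued_ex de).
have wr z : w (r z) = u z by case: (w_spec (r z)) => h _; apply: h.
have wt z : w (t z) = v z by case: (w_spec (t z)) => _ h; apply: h.
exists w; split => //; split => [d1 d2|de].
  case: (joint_surj d1) => [[b1 <-]|[g1 <-]]; case: (joint_surj d2) => [[b2 <-]|[g2 <-]].
  - by rewrite !wr; exact: cocone_mono_r.
  - rewrite le_eqVlt => /orP [/eqP ->//|/r_below_t [al /andP [h1 h2]]].
    by rewrite wr wt (le_trans (cocone_mono_r h1)) // upvq cocone_mono_t // -commute.
  - rewrite le_eqVlt => /orP [/eqP ->//|/t_below_r [al /andP [h1 h2]]].
    by rewrite wr wt (le_trans _ (cocone_mono_r h2)) // upvq cocone_mono_t // -commute.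
  - by rewrite !wt; exact: cocone_mono_t.
case: (joint_surj de) => [[be <-]|[ga <-]].
  by rewrite -(proj2 hr) !wr (proj2 hu).
by rewrite -(proj2 ht) !wt (proj2 hv).
Qed.

End Glue.

Lemma lam_eq_of_restrictions (x : nat) (w w' : int -> int) :
  lam_eq x (w \o r) (w' \o r) -> lam_eq x (w \o t) (w' \o t) -> lam_eq x w w'.
Proof.
move=> [k1 /= h1] [k2 /= h2].
have k12 : k1 = k2.
  by have := h1 (p 0); rewrite /= commute h2 => /addrI /mulzS_inj.
exists k1 => de; case: (joint_surj de) => [[be <-]|[ga <-]]; first exact: h1.
by rewrite k12; exact: h2.
Qed.

Lemma lam_pushout_of_cover : lam_pushout a b c d p q r t.
Proof.
split; first exact: lam_eq_refl.
move=> x u v hu hv [k /= hk].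
pose v' z := v z + (- k) * x.+1%:Z.
have vv' : lam_eq x v' v by exists k => z; rewrite /v' mulNr addrNK.
have upv' z : u (p z) = v' (q z) by rewrite /v' (hk z) mulNr addrK.
have [w [hw wr wt]] := lam_pushout_glue hu (lam_hom_eq (lam_eq_sym vv') hv) upv'.
have wru : lam_eq x (w \o r) u by exact: lam_eq_refl.
have wtv : lam_eq x (w \o t) v by apply: lam_eq_trans vv'; exact: lam_eq_refl.
exists w; split => // w' hw' w'r w't.
apply: lam_eq_of_restrictions.
  exact: lam_eq_trans wru (lam_eq_sym w'r).
exact: lam_eq_trans wtv (lam_eq_sym w't).
Qed.

End Pushout.
End LambdaSquare.

Section DeltaToLamTransfer.
Variables (a b c d : nat).

Lemma delta_to_lam_joint_surj (g : 'I_b.+1 -> 'I_d.+1) (h : 'I_c.+1 -> 'I_d.+1) :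
  (forall y, (exists x, g x = y) \/ (exists x, h x = y)) ->
  forall y, (exists x, delta_to_lam g x = y) \/ (exists x, delta_to_lam h x = y).
Proof.
move=> surj y; have [k [y0 ->]] := int_cyc_decomp d y.
case: (surj y0) => [[x0 <-]|[x0 <-]].
  by left; exists (k * b.+1%:Z + (x0 : nat)%:Z); rewrite delta_to_lamE.
by right; exists (k * c.+1%:Z + (x0 : nat)%:Z); rewrite delta_to_lamE.
Qed.

Lemma delta_to_lam_fold (g : 'I_b.+1 -> 'I_d.+1) (h : 'I_c.+1 -> 'I_d.+1) :
  (forall x1 x2, g x1 = g x2 -> x1 <> x2 -> exists y, h y = g x1) ->
  forall x1 x2, delta_to_lam g x1 = delta_to_lam g x2 -> x1 <> x2 ->
    exists y, delta_to_lam h y = delta_to_lam g x1.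
Proof.
move=> fold x1 x2; have [k1 [r1 ->]] := int_cyc_decomp b x1.
have [k2 [r2 ->]] := int_cyc_decomp b x2.
rewrite !delta_to_lamE => /int_cyc_decomp_inj [<- e] ne.
have [y hy] : exists y, h y = g r1 by apply: fold e _ => r12; apply: ne; rewrite r12.
by exists (k1 * c.+1%:Z + (y : nat)%:Z); rewrite !delta_to_lamE hy.
Qed.

Lemma delta_to_lam_between (e : 'I_a.+1 -> 'I_d.+1) (g : 'I_b.+1 -> 'I_d.+1)
    (h : 'I_c.+1 -> 'I_d.+1) :
  (forall x y, (g x < h y)%N -> exists z, (g x <= e z <= h y)%N) ->
  (forall x y, exists z, (g x <= e z)%N || (e z <= h y)%N) ->
  forall x y, delta_to_lam g x < delta_to_lam h y ->
    exists z, delta_to_lam g x <= delta_to_lam e z <= delta_to_lam h y.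
Proof.
move=> inside wrap x y; have [k1 [x0 ->]] := int_cyc_decomp b x.
have [k2 [y0 ->]] := int_cyc_decomp c y.
rewrite !delta_to_lamE int_cyc_decomp_lt => /orP [lt|/andP [/eqP <- lt]].
  have [z0 /orP [le|le]] := wrap x0 y0; [pose k := k1 | pose k := k2];
    exists (k * a.+1%:Z + (z0 : nat)%:Z);
    by rewrite delta_to_lamE !int_cyc_decomp_le lt le eqxx ?orbT ?andbT.
have [z0 /andP [le1 le2]] := inside _ _ lt.
exists (k1 * a.+1%:Z + (z0 : nat)%:Z).
by rewrite delta_to_lamE !int_cyc_decomp_le eqxx le1 le2 !orbT.
Qed.

End DeltaToLamTransfer.

Section DeltaSquare.
Variables (a b c d : nat).
Variables (fp : 'I_a.+1 -> 'I_b.+1) (fq : 'I_a.+1 -> 'I_c.+1).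
Variables (fr : 'I_b.+1 -> 'I_d.+1) (ft : 'I_c.+1 -> 'I_d.+1).
Hypotheses (hp : delta_hom fp) (hq : delta_hom fq) (hr : delta_hom fr) (ht : delta_hom ft).
Hypothesis commute : forall al, fr (fp al) = ft (fq al).
Hypothesis joint_lift : forall be ga, fr be = ft ga -> exists al, fp al = be /\ fq al = ga.

Local Notation p := (delta_to_lam fp).
Local Notation q := (delta_to_lam fq).
Local Notation r := (delta_to_lam fr).
Local Notation t := (delta_to_lam ft).

Lemma delta_to_lam_commute z : r (p z) = t (q z).
Proof. by rewrite -!delta_to_lam_comp; apply: delta_to_lam_eq. Qed.

Lemma delta_to_lam_joint_lift be ga : r be = t ga -> exists al, p al = be /\ q al = ga.
Proof.
have [k1 [be0 ->]] := int_cyc_decomp b be; have [k2 [ga0 ->]] := int_cyc_decomp c ga.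
rewrite !delta_to_lamE => /int_cyc_decomp_inj [<- /joint_lift [al0 [<- <-]]].
by exists (k1 * a.+1%:Z + (al0 : nat)%:Z); rewrite !delta_to_lamE.
Qed.

Lemma delta_lam_pullback :
  (forall al al', fp al = fp al' -> fq al = fq al' -> al = al') ->
  lam_pullback a b c d p q r t.
Proof.
move=> joint_inj; apply: lam_pullback_of_fiber_product;
  try exact: delta_to_lam_hom; [exact: delta_to_lam_commute|exact: delta_to_lam_joint_lift|].
move=> al al'; have [k [x ->]] := int_cyc_decomp a al; have [k' [x' ->]] := int_cyc_decomp a al'.
rewrite !delta_to_lamE => /int_cyc_decomp_inj [<- e1] /int_cyc_decomp_inj [_ e2].
by rewrite (joint_inj _ _ e1 e2).
Qed.

Lemma delta_lam_pushout :
  (forall de, (exists be, fr be = de) \/ (exists ga, ft ga = de)) ->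
  (forall b1 b2, fr b1 = fr b2 -> b1 <> b2 -> exists ga, ft ga = fr b1) ->
  (forall g1 g2, ft g1 = ft g2 -> g1 <> g2 -> exists be, fr be = ft g1) ->
  (forall be ga, (fr be < ft ga)%N -> exists al, (fr be <= fr (fp al) <= ft ga)%N) ->
  (forall be ga, exists al, (fr be <= fr (fp al))%N || (fr (fp al) <= ft ga)%N) ->
  (forall ga be, (ft ga < fr be)%N -> exists al, (ft ga <= fr (fp al) <= fr be)%N) ->
  (forall ga be, exists al, (ft ga <= fr (fp al))%N || (fr (fp al) <= fr be)%N) ->
  lam_pushout a b c d p q r t.
Proof.
move=> surj r_fold t_fold r_in r_wrap t_in t_wrap.
have rp_between := delta_to_lam_between r_in r_wrap.
have tp_between := delta_to_lam_between t_in t_wrap.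
apply: lam_pushout_of_cover; try exact: delta_to_lam_hom.
- exact: delta_to_lam_commute.
- exact: delta_to_lam_joint_lift.
- exact: delta_to_lam_joint_surj.
- exact: delta_to_lam_fold.
- exact: delta_to_lam_fold.
- by move=> be ga /rp_between [al h]; exists al; rewrite -delta_to_lam_comp.
- by move=> ga be /tp_between [al h]; exists al; rewrite -delta_to_lam_comp.
Qed.

End DeltaSquare.

(** * Necessity *)

Lemma lam_hom_congr_mod (b d : nat) (g : int -> int) (x y : int) :
  lam_hom b d g -> (g x == y %[mod d.+1])%Z -> exists x', g x' = y.
Proof.
move=> hg; rewrite eqz_mod_dvd => /dvdzP [k hk].
by exists (x + (- k) * b.+1%:Z); rewrite (lam_hom_shift hg) mulNr -hk opprB addrC subrK.
Qed.

Definition step_up (d : nat) (y x : int) : int :=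
  if (x == y %[mod d.+1])%Z then x + 1 else x.

Definition step_down (d : nat) (y x : int) : int :=
  if (x == y %[mod d.+1])%Z then x - 1 else x.

Lemma step_up_hom (d : nat) (y : int) : lam_hom d d (step_up d y).
Proof.
rewrite /step_up; split => [x x'|x]; last by rewrite modzDr; case: ifP => _ //; rewrite addrAC.
rewrite le_eqVlt => /orP [/eqP ->//|lt].
by case: ifP; case: ifP => _ _; lia.
Qed.

Lemma step_down_hom (d : nat) (y : int) : lam_hom d d (step_down d y).
Proof.
rewrite /step_down; split => [x x'|x]; last by rewrite modzDr; case: ifP => _ //; rewrite addrAC.
rewrite le_eqVlt => /orP [/eqP ->//|lt].
by case: ifP; case: ifP => _ _; lia.
Qed.

Lemma step_up_id (b d : nat) (g : int -> int) (y z : int) :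
  lam_hom b d g -> (forall x, g x != y) -> step_up d y (g z) = g z.
Proof.
rewrite /step_up => hg miss; case: ifP => // /(lam_hom_congr_mod hg) [x /eqP].
by rewrite (negbTE (miss x)).
Qed.

Lemma step_down_id (b d : nat) (g : int -> int) (y z : int) :
  lam_hom b d g -> (forall x, g x != y) -> step_down d y (g z) = g z.
Proof.
rewrite /step_down => hg miss; case: ifP => // /(lam_hom_congr_mod hg) [x /eqP].
by rewrite (negbTE (miss x)).
Qed.

Section PushoutTests.
Variables (a b c d : nat) (p q r t : int -> int).
Hypotheses (hr : lam_hom b d r) (ht : lam_hom c d t).
Hypothesis commute : forall z, r (p z) = t (q z).
Hypothesis PO : lam_pushout a b c d p q r t.

Lemma lam_pushout_cocone (x : nat) (u v : int -> int) :
  lam_hom b x u -> lam_hom c x v -> (forall z, u (p z) = v (q z)) ->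
  exists w K, [/\ lam_hom d x w, forall be, w (r be) = u be + K &
                                 forall ga, w (t ga) = v ga + K].
Proof.
move=> hu hv upvq; have [_ univ] := PO.
have [w [hw [k1 /= h1] [k2 /= h2] _]] := univ x u v hu hv (lam_eq_refl _ upvq).
have k12 : k1 = k2 by have := h1 (p 0); rewrite upvq h2 commute => /addrI /mulzS_inj.
exists w, (- (k1 * x.+1%:Z)); split => // [be|ga]; first by rewrite h1 addrK.
by rewrite h2 k12 addrK.
Qed.

Lemma lam_pushout_covers (y : int) :
  (forall be, r be != y) -> (forall ga, t ga != y) -> False.
Proof.
(* Both [id] and [step_up d y] glue [r] and [t], so they differ by a rotation, which is
   absurd unless d = 0. *)
move=> r_miss t_miss.
have r_fix z := step_up_id z hr r_miss; have t_fix z := step_up_id z ht t_miss.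
have [_ univ] := PO.
have [w [_ _ _ uniq]] := univ d r t hr ht (lam_eq_refl _ commute).
have w_id : lam_eq d w id by apply: uniq; [split | exact: lam_eq_refl..].
have w_step : lam_eq d w (step_up d y).
  by apply: uniq; [exact: step_up_hom | exact: lam_eq_refl..].
have [k /(_ y) /=] := lam_eq_trans (lam_eq_sym w_id) w_step.
rewrite /step_up eqxx /= => /addrI one.
have d0 : d = 0%N by case: (lerP k 0) => hk; nia.
by have := r_fix 0; rewrite /step_up d0 eqz_mod_dvd dvd1z; lia.
Qed.

Lemma lam_pushout_no_crossing (y be ga : int) : r be = y + 1 -> t ga = y ->
  (forall be, r be != y) -> (forall ga, t ga != y + 1) -> False.
Proof.
(* The cocone (step_down (y + 1) o r, step_up y o t) would send y to y + 1 and y + 1 to y. *)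
move=> rbe tga r_miss t_miss.
have r_fix z := step_up_id z hr r_miss; have t_fix z := step_down_id z ht t_miss.
have hu := lam_hom_comp hr (step_down_hom d (y + 1)).
have hv := lam_hom_comp ht (step_up_hom d y).
have [|w [K [[wmono _] wr wt]]] := lam_pushout_cocone hu hv.
  by move=> z /=; rewrite commute t_fix -commute r_fix.
have y_le : y <= y + 1 by rewrite lerDl.
have := wmono _ _ y_le; rewrite -{1}tga -rbe wr wt /= rbe tga.
by rewrite /step_up /step_down !eqxx; lia.
Qed.

End PushoutTests.

Lemma lam_eq_precomp (n : nat) (g g' h : int -> int) :
  lam_eq n g g' -> lam_eq n (g \o h) (g' \o h).
Proof. by move=> [k hk]; exists k => x; exact: hk. Qed.

Lemma lam_eq_postcomp (m n : nat) (g g' h : int -> int) :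
  lam_hom m n h -> lam_eq m g g' -> lam_eq n (h \o g) (h \o g').
Proof. by move=> hh [k hk]; exists k => x /=; rewrite hk (lam_hom_shift hh). Qed.

Lemma lam_pushout_sym (a b c d : nat) (p q r t : int -> int) :
  lam_pushout a b c d p q r t -> lam_pushout a c b d q p t r.
Proof.
move=> [comm univ]; split; first exact: lam_eq_sym.
move=> x v u hv hu /lam_eq_sym vu.
have [w [hw wr wt uniq]] := univ x u v hu hv vu.
by exists w; split => // w' hw' w't w'r; exact: uniq.
Qed.

Section Transport.
Variables (a b c d : nat) (p q q' r r' t t' : int -> int).
Hypotheses (qq' : lam_eq c q q') (rr' : lam_eq d r r') (tt' : lam_eq d t t').
Hypothesis commute' : lam_eq d (r' \o p) (t' \o q').

Lemma lam_pullback_transport :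
  lam_pullback a b c d p q r t -> lam_pullback a b c d p q' r' t'.
Proof.
move=> [_ univ]; split => // x u v hu hv ruv.
have ruv' : lam_eq d (r \o u) (t \o v).
  apply: lam_eq_trans (lam_eq_precomp u rr') _.
  exact: lam_eq_trans ruv (lam_eq_sym (lam_eq_precomp v tt')).
have [w [hw pw qw uniq]] := univ x u v hu hv ruv'.
exists w; split => //; first exact: lam_eq_trans (lam_eq_sym (lam_eq_precomp w qq')) qw.
move=> w'' hw'' pw'' qw''; apply: uniq => //.
exact: lam_eq_trans (lam_eq_precomp w'' qq') qw''.
Qed.


Lemma lam_pushout_transport :
  lam_pushout a b c d p q r t -> lam_pushout a b c d p q' r' t'.
Proof.
move=> [_ univ]; split => // x u v hu hv upvq.
have upvq' : lam_eq x (u \o p) (v \o q).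
  exact: lam_eq_trans upvq (lam_eq_sym (lam_eq_postcomp hv qq')).
have [w [hw wr wt uniq]] := univ x u v hu hv upvq'.
have w_rr' w'' : lam_hom d x w'' -> lam_eq x (w'' \o r') (w'' \o r).
  by move=> hw''; apply: lam_eq_sym; exact: lam_eq_postcomp hw'' rr'.
have w_tt' w'' : lam_hom d x w'' -> lam_eq x (w'' \o t') (w'' \o t).
  by move=> hw''; apply: lam_eq_sym; exact: lam_eq_postcomp hw'' tt'.
exists w; split => //; [exact: lam_eq_trans (w_rr' _ hw) wr | exact: lam_eq_trans (w_tt' _ hw) wt|].
move=> w'' hw'' w''r w''t; apply: uniq => //.
  exact: lam_eq_trans (lam_eq_sym (w_rr' _ hw'')) w''r.
exact: lam_eq_trans (lam_eq_sym (w_tt' _ hw'')) w''t.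
Qed.

End Transport.

Lemma lam_hom_orbit (b : nat) (x : int) : lam_hom 0 b (fun z => x + z * b.+1%:Z).
Proof.
split => [z z' zz'|z]; first by rewrite lerD2l ler_pM2r.
by rewrite mulrDl mul1r addrA.
Qed.

Lemma lam_pullback_joint_lift (a b c d : nat) (p q r t : int -> int) :
  lam_hom a b p -> lam_hom a c q -> lam_hom b d r -> lam_hom c d t ->
  (forall z, r (p z) = t (q z)) -> lam_pullback a b c d p q r t ->
  forall be ga, r be = t ga -> exists al, p al = be /\ q al = ga.
Proof.
(* Test the pullback against the orbits of [be] and [ga], viewed as maps out of <0>. *)
move=> hp hq hr ht commute [_ univ] be ga e.
have ruv : lam_eq d (r \o (fun z => be + z * b.+1%:Z)) (t \o (fun z => ga + z * c.+1%:Z)).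
  by apply: lam_eq_refl => z /=; rewrite (lam_hom_shift hr) (lam_hom_shift ht) e.
have [w [_ [k1 /= h1] [k2 /= h2] _]] := univ 0%N _ _ (lam_hom_orbit b be) (lam_hom_orbit c ga) ruv.
have k12 : k1 = k2.
  have := congr1 r (h1 0); have := congr1 t (h2 0).
  by rewrite !mul0r !addr0 (lam_hom_shift hr) (lam_hom_shift ht) commute e => -> /addrI /mulzS_inj.
exists (w 0 + k1 * a.+1%:Z); rewrite (lam_hom_shift hp) (lam_hom_shift hq).
by have := h1 0; have := h2 0; rewrite !mul0r !addr0 -k12 => <- <-.
Qed.

Section DeltaImage.
Variables (b d : nat) (phi : 'I_b.+1 -> 'I_d.+1).

Lemma delta_to_lam_hit (k : int) (y : 'I_d.+1) :
  in_image phi y -> exists x, delta_to_lam phi x = k * d.+1%:Z + (y : nat)%:Z.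
Proof.
by case/existsP => j /eqP fj; exists (k * b.+1%:Z + (j : nat)%:Z); rewrite delta_to_lamE fj.
Qed.

Lemma delta_to_lam_miss (k : int) (y : 'I_d.+1) :
  ~~ in_image phi y -> forall x, delta_to_lam phi x != k * d.+1%:Z + (y : nat)%:Z.
Proof.
move=> miss x; have [k' [j ->]] := int_cyc_decomp b x; rewrite delta_to_lamE.
apply/eqP => /int_cyc_decomp_inj [_ fj]; case/existsP: miss.
by exists j; rewrite fj.
Qed.

End DeltaImage.

Definition lift_value (d i : nat) (up : bool) (y : 'I_d.+1) : 'I_d.+2 :=
  inord (y + ((i < y)%N || up && (y == i :> nat))).

Lemma lift_valueE (d i : nat) (up : bool) (y : 'I_d.+1) :
  (lift_value i up y : nat) = (y + ((i < y)%N || up && (y == i :> nat)))%N.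
Proof. by rewrite inordK //; have := ltn_ord y; case: (_ || _); lia. Qed.

Lemma lift_value_mono (d i : nat) (up up' : bool) (y y' : 'I_d.+1) :
  (y <= y')%N -> (up <= up')%N -> (lift_value i up y <= lift_value i up' y')%N.
Proof.
rewrite !lift_valueE leq_eqVlt => /orP [/eqP/val_inj ->|lt] upup'.
  by rewrite leq_add2l; case: (i < y')%N; case: up up' upup' => [] [].
apply: leq_trans (leq_addr _ _); apply: leq_trans lt.
by have := leq_b1 ((i < y)%N || up && (y == i :> nat)); rewrite -(leq_add2l y) addn1.
Qed.

Lemma lift_value_off (d i : nat) (up up' : bool) (y : 'I_d.+1) :
  (y : nat) != i -> lift_value i up y = lift_value i up' y.
Proof. by move/negbTE => yi; apply: val_inj; rewrite /= !lift_valueE yi !andbF. Qed.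

Section DeltaPushout.
Variables (a b c d : nat) (p q : int -> int).
Variables (fr : 'I_b.+1 -> 'I_d.+1) (ft : 'I_c.+1 -> 'I_d.+1).
Hypotheses (hfr : delta_hom fr) (hft : delta_hom ft).
Local Notation r := (delta_to_lam fr).
Local Notation t := (delta_to_lam ft).
Hypothesis commute : forall z, r (p z) = t (q z).
Hypothesis PO : lam_pushout a b c d p q r t.

Lemma delta_pushout_covers (y : 'I_d.+1) : in_image fr y || in_image ft y.
Proof.
apply/norP => -[rmiss tmiss].
move: (delta_to_lam_miss 0 rmiss) (delta_to_lam_miss 0 tmiss); rewrite mul0r add0r.
exact: (lam_pushout_covers (delta_to_lam_hom hfr) (delta_to_lam_hom hft) commute PO).
Qed.

Lemma delta_pushout_no_crossing (y y' : 'I_d.+1) (k : int) :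
  (y : nat)%:Z + 1 = k * d.+1%:Z + (y' : nat)%:Z ->
  ~~ in_image fr y -> in_image fr y' -> in_image ft y -> ~~ in_image ft y' -> False.
Proof.
move=> yy' rmiss rhit thit tmiss.
have [be rbe] := delta_to_lam_hit k rhit; have [ga tga] := delta_to_lam_hit 0 thit.
rewrite -yy' in rbe; rewrite mul0r add0r in tga.
move: (delta_to_lam_miss 0 rmiss) (delta_to_lam_miss k tmiss); rewrite -yy' mul0r add0r.
exact: (lam_pushout_no_crossing (delta_to_lam_hom hfr) (delta_to_lam_hom hft) commute PO rbe tga).
Qed.

Lemma delta_pushout_split_fiber (i : 'I_d.+1) (l1 l2 : 'I_c.+1) :
  ~~ in_image fr i -> ft l1 = i -> ft l2 = i -> (l1 < l2)%N -> False.
Proof.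
(* [v] separates [l1] from [l2] although [ft] identifies them, and it agrees with [u] on
   the common image because [fr] misses [i]. *)
move=> rmiss fl1 fl2 l12.
pose u := lift_value i false \o fr.
pose v (l : 'I_c.+1) := lift_value i (l1 < l)%N (ft l).
have hu : delta_hom u by move=> x y xy; apply: lift_value_mono; [exact: hfr|].
have hv : delta_hom v.
  move=> x y xy; apply: lift_value_mono; first exact: hft.
  by case: (ltnP l1 x) => //= lx; rewrite (leq_trans lx xy).
have upvq z : delta_to_lam u (p z) = delta_to_lam v (q z).
  have := commute z; have [k [j ->]] := int_cyc_decomp b (p z).
  have [k' [l ->]] := int_cyc_decomp c (q z).
  rewrite !delta_to_lamE => /int_cyc_decomp_inj [<- e]; congr (_ + _%:Z); congr val.
  rewrite /u /v /= e; apply: lift_value_off; apply: contraNneq rmiss => el.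
  by apply/existsP; exists j; rewrite e el.
have [w [K [_ _ wt]]] :=
  lam_pushout_cocone commute PO (delta_to_lam_hom hu) (delta_to_lam_hom hv) upvq.
have := wt (l1 : nat)%:Z; rewrite delta_to_lam_ord fl1 -fl2 -delta_to_lam_ord wt.
rewrite !delta_to_lam_ord => /addIr /eqP.
by rewrite eqz_nat /v !lift_valueE fl1 fl2 eqxx !ltnn l12 /= => /eqP; lia.
Qed.

End DeltaPushout.

Lemma fiber_card_neq1 (k n : nat) (g : 'I_k.+1 -> 'I_n.+1) (i : 'I_n.+1) :
  #|[set j | g j == i]| != 1%N ->
  ~~ in_image g i \/ exists j1 j2, [/\ g j1 = i, g j2 = i & (j1 < j2)%N].
Proof.
move=> card1; case: (boolP (in_image g i)) => [/existsP [j /eqP gj]|]; last by left.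
right; have [j' gj' jj'] : exists2 j', (g j' == i) & (j' != j).
  apply/exists_inP; apply: contraNT card1 => /exists_inPn none; apply/cards1P; exists j.
  apply/setP => x; rewrite !inE; apply/idP/eqP => [gx|->]; last exact/eqP/val_inj.
  by apply/eqP; apply: contraNT (none x gx).
have gj2 : g j = i by apply: val_inj.
case: (ltngtP j j') => [lt|lt|/val_inj E]; last by rewrite E eqxx in jj'.
  by exists j, j'; rewrite gj2 (eqP gj').
by exists j', j; rewrite gj2 (eqP gj').
Qed.

Section DeltaBiCartesian.
Variables (a b c d : nat) (p q : int -> int).
Variables (fr : 'I_b.+1 -> 'I_d.+1) (ft : 'I_c.+1 -> 'I_d.+1).
Hypotheses (hp : lam_hom a b p) (hq : lam_hom a c q).
Hypotheses (hfr : delta_hom fr) (hft : delta_hom ft).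
Local Notation r := (delta_to_lam fr).
Local Notation t := (delta_to_lam ft).
Hypothesis commute : forall z, r (p z) = t (q z).
Hypotheses (PB : lam_pullback a b c d p q r t) (PO : lam_pushout a b c d p q r t).

Let commute' z : t (q z) = r (p z) := esym (commute z).
Let PO' := lam_pushout_sym PO.

Lemma delta_pullback_no_double_fold (j1 j2 : 'I_b.+1) (l1 l2 : 'I_c.+1) :
  (j1 < j2)%N -> (l1 < l2)%N -> fr j1 = fr j2 -> ft l1 = ft l2 -> fr j1 = ft l1 -> False.
Proof.
move=> j12 l12 fj tl jl.
have lift := lam_pullback_joint_lift hp hq (delta_to_lam_hom hfr) (delta_to_lam_hom hft) commute PB.
have [al [pal qal]] : exists al, p al = (j1 : nat)%:Z /\ q al = (l2 : nat)%:Z.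
  by apply: lift; rewrite !delta_to_lam_ord jl tl.
have [al' [pal' qal']] : exists al, p al = (j2 : nat)%:Z /\ q al = (l1 : nat)%:Z.
  by apply: lift; rewrite !delta_to_lam_ord -fj jl.
case: (leP al al') => [/(proj1 hq)|/ltW /(proj1 hp)].
  by rewrite qal qal' lez_nat leqNgt l12.
by rewrite pal pal' lez_nat leqNgt j12.
Qed.

Lemma delta_bicartesian_fiber (i : 'I_d.+1) :
  (#|[set j | fr j == i]| == 1%N) || (#|[set l | ft l == i]| == 1%N).
Proof.
apply/norP => -[/fiber_card_neq1 [rmiss|[j1 [j2 [fj1 fj2 j12]]]]
                /fiber_card_neq1 [tmiss|[l1 [l2 [tl1 tl2 l12]]]]].
- by move: (delta_pushout_covers hfr hft commute PO i); rewrite (negbTE rmiss) (negbTE tmiss).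
- exact: (delta_pushout_split_fiber hfr hft commute PO rmiss tl1 tl2 l12).
- exact: (delta_pushout_split_fiber hft hfr commute' PO' tmiss fj1 fj2 j12).
- by apply: (delta_pullback_no_double_fold j12 l12); rewrite ?fj1 ?fj2 ?tl1 ?tl2.
Qed.

Lemma delta_bicartesian_edge (y y' : 'I_d.+1) (k : int) :
  (y : nat)%:Z + 1 = k * d.+1%:Z + (y' : nat)%:Z ->
  (in_image fr y && in_image fr y') || (in_image ft y && in_image ft y').
Proof.
move=> yy'.
move: (delta_pushout_covers hfr hft commute PO y) (delta_pushout_covers hfr hft commute PO y').
move: (delta_pushout_no_crossing hfr hft commute PO yy').
move: (delta_pushout_no_crossing hft hfr commute' PO' yy').
case: (in_image fr y); case: (in_image fr y'); case: (in_image ft y); case: (in_image ft y') => //=;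
by move=> cross' cross _ _; exfalso; first [exact: cross | exact: cross'].
Qed.

End DeltaBiCartesian.

Lemma lam_square_normalize (c d : nat) (p q r t r' t' : int -> int) :
  lam_hom c d t' -> lam_eq d (r \o p) (t \o q) -> lam_eq d r' r -> lam_eq d t' t ->
  exists q', lam_eq c q q' /\ forall z, r' (p z) = t' (q' z).
Proof.
move=> ht' [j /= hj] [k1 /= hk1] [k2 /= hk2].
exists (fun z => q z + (k2 - j - k1) * c.+1%:Z); split; first by exists (k2 - j - k1).
move=> z; rewrite (lam_hom_shift ht'); have := hk1 (p z); have := hj z; have := hk2 (q z).
by rewrite !mulrBl; lia.
Qed.

Lemma at_most_oneP (S : finType) (P : S -> bool) :
  (forall s s', s != s' -> P s -> P s' -> False) -> at_most_one (fun s => P s).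
Proof. by move=> h s s' Ps Ps'; apply/eqP; apply: contraPT Ps' => /h /(_ Ps). Qed.

Section Necessity.
Variables (S : finType) (n : nat) (m : S -> nat).
Variable f : forall s : S, 'I_(m s).+1 -> 'I_n.+1.
Arguments f : clear implicits.
Hypothesis hf : forall s : S, delta_hom (f s).
Arguments hf : clear implicits.
Variables (ob : {set S} -> nat) (mor : {set S} -> {set S} -> int -> int).
Hypotheses (cube : lam_cube ob mor) (ext : extends_claw f ob mor).
Hypotheses (SC : strongly_cartesian ob mor) (SCC : strongly_cocartesian ob mor).

Lemma cube_face_at_pair (s s' : S) : s != s' ->
  exists a p q, [/\ lam_hom a (m s) p, lam_hom a (m s') q,
    forall z, delta_to_lam (f s) (p z) = delta_to_lam (f s') (q z),
    lam_pullback a (m s) (m s') n p q (delta_to_lam (f s)) (delta_to_lam (f s')) &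
    lam_pushout a (m s) (m s') n p q (delta_to_lam (f s)) (delta_to_lam (f s'))].
Proof.
move=> ss'; have [hom _ _] := cube; have [ob0 ob1] := ext.
have PB := SC ss' (negbT (in_set0 s)) (negbT (in_set0 s')).
have PO := SCC ss' (negbT (in_set0 s)) (negbT (in_set0 s')).
rewrite !setU0 in PB PO; have [obs rs] := ob1 s; have [obs' rs'] := ob1 s'.
rewrite obs obs' ob0 in PB PO.
have hp := hom _ _ (subsetUl [set s] [set s']); have hq := hom _ _ (subsetUr [set s] [set s']).
rewrite obs in hp; rewrite obs' in hq.
have hr := delta_to_lam_hom (hf s); have ht := delta_to_lam_hom (hf s').
have [q' [qq' commute]] := lam_square_normalize ht (proj1 PB) rs rs'.
exists (ob (s |: [set s'])), (mor [set s] (s |: [set s'])), q'; split => //.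
- exact: lam_hom_eq qq' hq.
- exact: lam_pullback_transport qq' (lam_eq_sym rs) (lam_eq_sym rs') (lam_eq_refl _ commute) PB.
- exact: lam_pushout_transport qq' (lam_eq_sym rs) (lam_eq_sym rs') (lam_eq_refl _ commute) PO.
Qed.

Lemma cube_cyclically_compatible : cyclically_compatible f.
Proof.
have fiber s s' i : s != s' ->
    (#|[set j | f s j == i]| == 1%N) || (#|[set j | f s' j == i]| == 1%N).
  move=> ss'; have [a [p [q [hp hq commute PB PO]]]] := cube_face_at_pair ss'.
  exact: (delta_bicartesian_fiber hp hq (hf s) (hf s') commute PB PO i).
have edge s s' (y y' : 'I_n.+1) k : s != s' ->
    (y : nat)%:Z + 1 = k * n.+1%:Z + (y' : nat)%:Z ->
    (in_image (f s) y && in_image (f s) y') || (in_image (f s') y && in_image (f s') y').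
  move=> ss' yy'; have [a [p [q [_ _ commute _ PO]]]] := cube_face_at_pair ss'.
  exact: (delta_bicartesian_edge (hf s) (hf s') commute PO yy').
split; first split.
- move=> i; apply: at_most_oneP => s s' ss' /negbTE h /negbTE h'.
  by have := fiber s s' i ss'; rewrite h h'.
- move=> i /andP [i0 iN]; apply: at_most_oneP => s s' ss' /negbTE h /negbTE h'.
  have [lt1 lt2] : (i.-1 < n.+1)%N /\ (i < n.+1)%N by split; lia.
  have yy' : ((inord i.-1 : 'I_n.+1) : nat)%:Z + 1 = 0 * n.+1%:Z + ((inord i : 'I_n.+1) : nat)%:Z.
    by rewrite !inordK //; lia.
  by have := edge s s' _ _ _ ss' yy'; rewrite !inordK // h h'.
- apply: at_most_oneP => s s' ss' /negbTE h /negbTE h'.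
  have yy' : ((ord_max : 'I_n.+1) : nat)%:Z + 1 = 1 * n.+1%:Z + ((ord0 : 'I_n.+1) : nat)%:Z.
    by rewrite mul1r addr0 /=; lia.
  have := edge s s' _ _ _ ss' yy'.
  by rewrite [in_image (f s) n && _]andbC [in_image (f s') n && _]andbC h h'.
Qed.

End Necessity.

Local Close Scope ring_scope.

(** * Sufficiency: the cube of iterated fibre products *)

Section ChainRank.
Variables (X : finType) (le : rel X) (A : {set X}).
Hypothesis le_refl : reflexive le.
Hypothesis le_trans : transitive le.
Hypothesis le_anti : {in A &, antisymmetric le}.
Hypothesis le_total : {in A &, total le}.

Definition chain_rank (x : X) : nat := #|[set y in A | le y x && (y != x)]|.

Lemma chain_rank_lt x : x \in A -> chain_rank x < #|A|.
Proof.
move=> xA; apply: proper_card; apply/properP; split.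
  by apply/subsetP => y; rewrite inE => /andP [].
by exists x => //; rewrite inE eqxx !andbF.
Qed.

Lemma chain_rank_strict x y :
  x \in A -> y \in A -> le x y -> x != y -> chain_rank x < chain_rank y.
Proof.
move=> xA yA xy neq; apply: proper_card; apply/properP; split.
  apply/subsetP => z; rewrite !inE => /andP [-> /andP [zx _]].
  rewrite (le_trans zx xy) /=; apply: contraNneq neq => zy.
  by apply/eqP; apply: (le_anti xA yA); rewrite xy -zy zx.
by exists x; rewrite !inE ?xA ?xy ?neq ?eqxx ?andbF.
Qed.

Lemma chain_rank_leE x y : x \in A -> y \in A -> (chain_rank x <= chain_rank y) = le x y.
Proof.
move=> xA yA; apply/idP/idP => [|xy]; last first.
  by have [->//|neq] := eqVneq x y; exact/ltnW/chain_rank_strict.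
apply: contraTT => nxy; have [yx|neq] := eqVneq y x; first by rewrite yx le_refl in nxy.
have yx : le y x by have := le_total xA yA; rewrite (negbTE nxy).
by rewrite -ltnNge chain_rank_strict.
Qed.

Lemma chain_rank_inj : {in A &, injective chain_rank}.
Proof.
by move=> x y xA yA e; apply: (le_anti xA yA); rewrite -!chain_rank_leE // e leqnn.
Qed.

Lemma chain_rank_onto (r : nat) : r < #|A| -> exists2 x, x \in A & chain_rank x = r.
Proof.
move=> rA; set s := [seq chain_rank x | x <- enum A].
have s_uniq : uniq s.
  by rewrite map_inj_in_uniq ?enum_uniq // => x y; rewrite !mem_enum; exact: chain_rank_inj.
have s_sub : {subset s <= iota 0 #|A|}.
  by move=> _ /mapP [x xA ->]; rewrite mem_iota chain_rank_lt // -mem_enum.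
have s_size : size (iota 0 #|A|) <= size s by rewrite size_iota size_map -cardE.
have [_ s_iota] := uniq_min_size s_uniq s_sub s_size.
have /mapP [x xA ->] : r \in s by rewrite s_iota mem_iota.
by exists x; rewrite // -mem_enum.
Qed.

Lemma chain_rank_param (k : nat) (g : 'I_k.+1 -> X) :
  A = [set g i | i : 'I_k.+1] -> (forall i j, le (g i) (g j) = (i <= j)) ->
  #|A| = k.+1 /\ forall i, chain_rank (g i) = i.
Proof.
move=> A_img g_le; have g_inj : injective g.
  by move=> i j e; apply/val_inj/eqP; rewrite eqn_leq -!g_le e le_refl.
split; first by rewrite A_img card_imset ?card_ord.
move=> i; rewrite /chain_rank.
have -> : [set y in A | le y (g i) && (y != g i)] = g @: [set j : 'I_k.+1 | j < i].
  apply/setP => y; rewrite A_img inE; apply/andP/imsetP => [[/imsetP [j _ ->]]|[j]].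
    rewrite g_le (inj_eq g_inj) => /andP [ji nji]; exists j => //.
    by rewrite inE ltn_neqAle ji andbT.
  rewrite inE => ji ->; split; first exact: imset_f.
  rewrite g_le (ltnW ji) /=; apply: contraTneq ji => /g_inj ->.
  by rewrite ltnn.
rewrite card_imset //.
have -> : [set j : 'I_k.+1 | j < i] = [set widen_ord (ltnW (ltn_ord i)) j | j : 'I_i].
  apply/setP => j; rewrite inE; apply/idP/imsetP => [ji|[j' _ ->]] /=; last exact: ltn_ord.
  by exists (Ordinal ji) => //; apply: val_inj.
rewrite card_imset ?card_ord //.
by move=> x y /(congr1 val) /= /val_inj.
Qed.

End ChainRank.

Section Fibers.
Variables (k n : nat) (g : 'I_k.+1 -> 'I_n.+1) (y : 'I_n.+1).
Hypothesis g_fiber1 : #|[set j | g j == y]| == 1.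

Lemma fiber_card1_image : in_image g y.
Proof.
by have /cards1P [j /setP /(_ j)] := g_fiber1; rewrite !inE eqxx => gj; apply/existsP; exists j.
Qed.

Lemma fiber_card1_inj (j j' : 'I_k.+1) : g j = y -> g j' = y -> j = j'.
Proof.
have /cards1P [j0 fib] := g_fiber1; move=> gj gj'.
have := fib; move/setP => /(_ j); have := fib; move/setP => /(_ j').
by rewrite !inE gj gj' eqxx => /esym /eqP -> /esym /eqP ->.
Qed.

End Fibers.

Section Sufficiency.
Variables (S : finType) (n : nat) (m : S -> nat).
Variable f : forall s : S, 'I_(m s).+1 -> 'I_n.+1.
Arguments f : clear implicits.
Hypothesis hf : forall s : S, delta_hom (f s).
Hypothesis hcc : cyclically_compatible f.

(* A point of Q_T is a level y together with preimages of y under the f_s, s in T; the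
   coordinates outside T are padded with 0 so that all the Q_T live in one finite type. *)
Definition point := ('I_n.+1 * {dffun forall s : S, 'I_(m s).+1})%type.

Definition fiber_prod (T : {set S}) : {set point} :=
  [set P : point | [forall s, if s \in T then f s (P.2 s) == P.1 else P.2 s == ord0]].

Definition point_le (P Q : point) : bool :=
  (P.1 <= Q.1)%N && [forall s, (P.2 s <= Q.2 s)%N].

Definition restrict (T : {set S}) (P : point) : point :=
  (P.1, [ffun s => if s \in T then P.2 s else ord0]).

Definition glue (U : {set S}) (P Q : point) : point :=
  (P.1, [ffun s => if s \in U then P.2 s else Q.2 s]).

Definition preimage (s : S) (y : 'I_n.+1) : 'I_(m s).+1 := odflt ord0 [pick j | f s j == y].

Lemma preimageP (s : S) (y : 'I_n.+1) : in_image (f s) y -> f s (preimage s y) = y.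
Proof.
rewrite /preimage; case: pickP => [j /eqP //|none] /existsP [j fj].
by move: (none j); rewrite -(inj_eq val_inj) fj.
Qed.

Lemma fiber_prodP (T : {set S}) (P : point) :
  reflect (forall s, if s \in T then f s (P.2 s) = P.1 else P.2 s = ord0) (P \in fiber_prod T).
Proof.
rewrite inE; apply: (iffP forallP) => h s; have := h s; by case: (s \in T) => /eqP.
Qed.

Lemma fiber_prod_in (T : {set S}) (P : point) (s : S) :
  P \in fiber_prod T -> s \in T -> f s (P.2 s) = P.1.
Proof. by move=> /fiber_prodP /(_ s); case: (s \in T). Qed.

Lemma fiber_prod_out (T : {set S}) (P : point) (s : S) :
  P \in fiber_prod T -> s \notin T -> P.2 s = ord0.
Proof. by move=> /fiber_prodP /(_ s); case: (s \in T). Qed.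

Lemma fiber_prod_image (T : {set S}) (P : point) (s : S) :
  P \in fiber_prod T -> s \in T -> in_image (f s) P.1.
Proof. by move=> PT sT; apply/existsP; exists (P.2 s); rewrite (fiber_prod_in PT sT). Qed.

Lemma restrict_fiber_prod (T : {set S}) (P : point) :
  {in T, forall s, f s (P.2 s) = P.1} -> restrict T P \in fiber_prod T.
Proof.
by move=> h; apply/fiber_prodP => s /=; rewrite ffunE; case: (boolP (s \in T)) => sT //; exact: h.
Qed.

Lemma restrict_id (T : {set S}) (P : point) : P \in fiber_prod T -> restrict T P = P.
Proof.
case: P => y F PT; congr pair; apply/ffunP => s; rewrite ffunE.
by case: ifPn => // /(fiber_prod_out PT).
Qed.

Lemma restrict_restrict (T T' : {set S}) (P : point) :
  T \subset T' -> restrict T (restrict T' P) = restrict T P.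
Proof.
move=> TT'; congr pair; apply/ffunP => s; rewrite !ffunE.
by case: ifP => // /(subsetP TT') ->.
Qed.

Lemma restrict_sub (T T' : {set S}) (P : point) :
  T \subset T' -> P \in fiber_prod T' -> restrict T P \in fiber_prod T.
Proof. by move=> TT' PT'; apply: restrict_fiber_prod => s /(subsetP TT'); exact: fiber_prod_in. Qed.

Lemma point_le_refl : reflexive point_le.
Proof. by move=> P; rewrite /point_le leqnn; apply/forallP. Qed.

Lemma point_le_trans : transitive point_le.
Proof.
move=> Q P R /andP [PQ1 /forallP PQ2] /andP [QR1 /forallP QR2].
by rewrite /point_le (leq_trans PQ1 QR1); apply/forallP => s; exact: leq_trans (PQ2 s) (QR2 s).
Qed.

Lemma point_le_anti : antisymmetric point_le.
Proof.
move=> [y F] [y' F']; rewrite /point_le /=.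
move=> /andP [/andP [yy' /forallP FF'] /andP [y'y /forallP F'F]].
congr pair; first by apply/val_inj/eqP; rewrite eqn_leq yy' y'y.
by apply/ffunP => s; apply/val_inj/eqP; rewrite eqn_leq FF' F'F.
Qed.

Lemma restrict_le (T : {set S}) (P Q : point) :
  point_le P Q -> point_le (restrict T P) (restrict T Q).
Proof.
move=> /andP [PQ1 /forallP PQ2]; rewrite /point_le PQ1; apply/forallP => s.
by rewrite !ffunE; case: ifP.
Qed.

Lemma point_le_level (T : {set S}) (P Q : point) :
  P \in fiber_prod T -> Q \in fiber_prod T -> (P.1 < Q.1)%N -> point_le P Q.
Proof.
move=> PT QT lt; rewrite /point_le (ltnW lt); apply/forallP => s.
have [sT|sT] := boolP (s \in T); last by rewrite (fiber_prod_out PT sT) (fiber_prod_out QT sT).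
rewrite leqNgt; apply: contraTN lt => lt.
by rewrite -leqNgt -(fiber_prod_in PT sT) -(fiber_prod_in QT sT) hf // ltnW.
Qed.

Lemma bc1_pair (s s' : S) (y : 'I_n.+1) : s != s' ->
  (#|[set j | f s j == y]| == 1) || (#|[set j | f s' j == y]| == 1).
Proof.
move=> ss'; have [[bc1 _] _] := hcc; apply/norP => -[s1 s1'].
by move: ss'; rewrite (bc1 y s s' s1 s1') eqxx.
Qed.

Lemma fiber_prod_chain (T : {set S}) : {in fiber_prod T &, total point_le}.
Proof.
move=> P Q PT QT; have [lt|lt|eqy] := ltngtP P.1 Q.1.
- by rewrite (point_le_level PT QT lt).
- by rewrite (point_le_level QT PT lt) orbT.
apply/negPn/negP; rewrite negb_or /point_le eqy leqnn /=.
case/andP => /forallPn [s]; rewrite -ltnNge => QPs /forallPn [s']; rewrite -ltnNge => PQs'.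
have inT u (R R' : point) : R \in fiber_prod T -> R' \in fiber_prod T ->
    (R.2 u < R'.2 u)%N -> u \in T.
  move=> RT R'T; apply: contraTT => uT.
  by rewrite (fiber_prod_out RT uT) (fiber_prod_out R'T uT).
have sT := inT _ _ _ QT PT QPs; have s'T := inT _ _ _ PT QT PQs'.
have ss' : s != s' by apply: contraTneq QPs => ->; rewrite -leqNgt ltnW.
have yQ : Q.1 = P.1 by apply: val_inj.
have /orP [s1|s1] := bc1_pair P.1 ss'.
  have := fiber_card1_inj s1 (fiber_prod_in PT sT) (etrans (fiber_prod_in QT sT) yQ).
  by move=> E; move: QPs; rewrite E ltnn.
have := fiber_card1_inj s1 (fiber_prod_in PT s'T) (etrans (fiber_prod_in QT s'T) yQ).
by move=> E; move: PQs'; rewrite E ltnn.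
Qed.

Definition hits (s : S) (z : nat) : bool := in_image (f s) (z %% n.+1).

Lemma hits_ord (s : S) (y : 'I_n.+1) : hits s y = in_image (f s) y.
Proof. by rewrite /hits modn_small. Qed.

(* BC2 together with the cyclic condition, read on the cycle [n]. *)
Lemma edge_hit (s s' : S) (z : nat) : s != s' ->
  (hits s z && hits s z.+1) || (hits s' z && hits s' z.+1).
Proof.
move=> ss'; have [[_ bc2] cyc] := hcc; rewrite /hits.
have z_lt : (z %% n.+1 < n.+1)%N by rewrite ltn_mod.
apply/norP => -[hs hs'].
have [zn|zn] := eqVneq (z %% n.+1)%N n.
  have z1 : (z.+1 %% n.+1 = 0)%N by rewrite -addn1 -modnDml zn addn1 modnn.
  rewrite zn z1 in hs hs'; rewrite andbC in hs; rewrite andbC in hs'.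
  by move: ss'; rewrite (cyc s s' hs hs') eqxx.
have i_range : (0 < (z %% n.+1).+1 <= n)%N.
  by move: (z %% n.+1)%N z_lt zn => r r_lt rn; apply/andP; split; lia.
have z1 : (z.+1 %% n.+1 = (z %% n.+1).+1)%N.
  by rewrite -[z.+1]addn1 -modnDml modn_small addn1 // ltnS; case/andP: i_range.
rewrite z1 in hs hs'.
by move: ss'; rewrite (bc2 _ i_range s s' hs hs') eqxx.
Qed.

Lemma hits_after_miss (s' u : S) (z : nat) : u != s' -> ~~ hits s' z -> hits u z.+1.
Proof.
move=> us' miss; have /orP [/andP [_ //]|/andP [hit _]] := edge_hit z us'.
by rewrite hit in miss.
Qed.

Lemma walk_until_hit (s' : S) (U : {set S}) (y e : nat) : s' \notin U ->
  {in U, forall u, hits u y} -> hits s' (y + e) ->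
  exists2 d, (d <= e)%N & {in s' |: U, forall u, hits u (y + d)}.
Proof.
move=> s'U Uy s'e; have ex : exists d, hits s' (y + d) by exists e.
have [d s'd dmin] := ex_minnP ex; exists d; first exact: dmin.
move=> u; rewrite in_setU1 => /predU1P [-> //|uU].
case: d s'd dmin => [|d] s'd dmin; first by rewrite addn0 Uy.
rewrite addnS; apply: (hits_after_miss (s' := s')); first by apply: contraNneq s'U => <-.
by apply/negP => /dmin; rewrite ltnn.
Qed.

Lemma common_level (T : {set S}) : exists y : 'I_n.+1, {in T, forall s, in_image (f s) y}.
Proof.
elim: {T}_.+1 {-2}T (ltnSn #|T|) => // N IH T.
have [->|[s sT]] := set_0Vmem T; first by exists ord0 => s; rewrite inE.
rewrite (cardsD1 s T) sT ltnS => card_T.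
have [y0 y0T] := IH (T :\ s) card_T.
have s_hit : hits s (y0 + (f s ord0 + n.+1 - y0)).
  have -> : (y0 + (f s ord0 + n.+1 - y0) = f s ord0 + n.+1)%N by have := ltn_ord y0; lia.
  by rewrite /hits modnDr modn_small //; apply/existsP; exists ord0.
have y0T' : {in T :\ s, forall u, hits u y0} by move=> u /y0T; rewrite hits_ord.
have [d _ Td] := walk_until_hit (negbT (setD11 s T)) y0T' s_hit.
exists (Ordinal (ltn_pmod (y0 + d) (ltn0Sn n))) => u uT.
by apply: Td; rewrite setD1K.
Qed.

Lemma restrict_glue (T U : {set S}) (P Q : point) :
  T \subset U -> restrict T (glue U P Q) = restrict T P.
Proof.
move=> TU; congr pair; apply/ffunP => u; rewrite !ffunE.
by case: (boolP (u \in T)) => // /(subsetP TU) ->.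
Qed.

Lemma fiber_prod_extend (U V : {set S}) (P : point) :
  U \subset V -> P \in fiber_prod U -> {in V, forall u, in_image (f u) P.1} ->
  exists2 P', P' \in fiber_prod V & restrict U P' = P.
Proof.
move=> UV PU VP; pose P' := glue U P (P.1, [ffun s => preimage s P.1]).
exists (restrict V P'); last by rewrite restrict_restrict // restrict_glue // restrict_id.
apply: restrict_fiber_prod => u uV; rewrite /P' /= ffunE.
by case: ifPn => [/(fiber_prod_in PU)|_]; rewrite ?ffunE ?preimageP ?VP.
Qed.

Lemma fiber_prod_extend1 (U : {set S}) (s : S) (P : point) :
  P \in fiber_prod U -> in_image (f s) P.1 ->
  exists2 P', P' \in fiber_prod (s |: U) & restrict U P' = P.
Proof.
move=> PU sP; apply: (fiber_prod_extend (subsetUr _ _) PU) => u.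
by rewrite in_setU1 => /predU1P [->|/(fiber_prod_image PU)].
Qed.

Lemma fiber_prod_eq (U : {set S}) (P Q : point) : P \in fiber_prod U -> Q \in fiber_prod U ->
  P.1 = Q.1 -> {in U, forall u, P.2 u = Q.2 u} -> P = Q.
Proof.
case: P Q => [y F] [y' F'] PU QU /= <- FF'; congr pair; apply/ffunP => u.
have [uU|uU] := boolP (u \in U); first exact: FF'.
by rewrite (fiber_prod_out PU uU) (fiber_prod_out QU uU).
Qed.

Lemma restrict_eqP (T : {set S}) (P Q : point) : restrict T P = restrict T Q ->
  P.1 = Q.1 /\ {in T, forall u, P.2 u = Q.2 u}.
Proof.
move=> e; split; first exact: (congr1 fst e).
by move=> u uT; have := congr1 (fun R : point => R.2 u) e; rewrite /= !ffunE uT.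
Qed.

Lemma fiber_prod_at_level (V : {set S}) (y : 'I_n.+1) :
  {in V, forall u, in_image (f u) y} -> exists2 P, P \in fiber_prod V & P.1 = y.
Proof.
move=> Vy; pose P0 : point := (y, [ffun s => ord0]).
have P0_in : P0 \in fiber_prod set0 by apply/fiber_prodP => s; rewrite inE ffunE.
have [P PV /(congr1 fst) PP0] := fiber_prod_extend (sub0set V) P0_in Vy.
by exists P.
Qed.

Lemma fiber_prod_nonempty (T : {set S}) : exists P, P \in fiber_prod T.
Proof.
have [y Ty] := common_level T; have [P PT _] := fiber_prod_at_level Ty.
by exists P.
Qed.

Definition last_rank (T : {set S}) : nat := #|fiber_prod T|.-1.

Lemma last_rankS (T : {set S}) : (last_rank T).+1 = #|fiber_prod T|.
Proof.
have [P PT] := fiber_prod_nonempty T.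
by rewrite /last_rank prednK //; apply/card_gt0P; exists P.
Qed.

Local Notation rank T := (chain_rank point_le (fiber_prod T)).

Lemma rank_lt (T : {set S}) (P : point) : P \in fiber_prod T -> rank T P < (last_rank T).+1.
Proof. by move=> PT; rewrite last_rankS chain_rank_lt. Qed.

Lemma rank_leE (T : {set S}) (P Q : point) : P \in fiber_prod T -> Q \in fiber_prod T ->
  (rank T P <= rank T Q) = point_le P Q.
Proof.
apply: chain_rank_leE; [exact: point_le_refl | exact: point_le_trans |
  exact: in2W point_le_anti | exact: fiber_prod_chain].
Qed.

Lemma rank_inj (T : {set S}) : {in fiber_prod T &, injective (rank T)}.
Proof.
by move=> P Q PT QT e; apply: point_le_anti; rewrite -(rank_leE PT QT) -(rank_leE QT PT) e leqnn.
Qed.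

Definition ord_of (T : {set S}) (P : point) : 'I_(last_rank T).+1 := inord (rank T P).

Definition pt_of (T : {set S}) (r : 'I_(last_rank T).+1) : point :=
  odflt (ord0, [ffun s => ord0]) [pick P in fiber_prod T | ord_of T P == r].
Arguments pt_of : clear implicits.

Lemma ord_of_val (T : {set S}) (P : point) :
  P \in fiber_prod T -> (ord_of T P : nat) = rank T P.
Proof. by move=> PT; rewrite inordK ?rank_lt. Qed.

Lemma ord_of_le (T : {set S}) (P Q : point) : P \in fiber_prod T -> Q \in fiber_prod T ->
  (ord_of T P <= ord_of T Q) = point_le P Q.
Proof. by move=> PT QT; rewrite !ord_of_val // (rank_leE PT QT). Qed.

Lemma ord_of_inj (T : {set S}) : {in fiber_prod T &, injective (ord_of T)}.
Proof.
by move=> P Q PT QT /(congr1 val); rewrite /= !ord_of_val //; exact: rank_inj.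
Qed.

Lemma pt_of_spec (T : {set S}) (r : 'I_(last_rank T).+1) :
  pt_of T r \in fiber_prod T /\ ord_of T (pt_of T r) = r.
Proof.
rewrite /pt_of; case: pickP => [P /andP [PT /eqP] //|none].
have r_lt : r < #|fiber_prod T| by rewrite -last_rankS ltn_ord.
have [P PT Pr] :=
  chain_rank_onto point_le_refl point_le_trans (in2W point_le_anti) (@fiber_prod_chain T) r_lt.
have oP : ord_of T P = r by apply: val_inj; rewrite /= ord_of_val.
by move: (none P); rewrite /= PT oP eqxx.
Qed.

Lemma pt_of_in (T : {set S}) (r : 'I_(last_rank T).+1) : pt_of T r \in fiber_prod T.
Proof. by case: (pt_of_spec r). Qed.

Lemma pt_ofK (T : {set S}) : cancel (pt_of T) (ord_of T).
Proof. by move=> r; case: (pt_of_spec r). Qed.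

Lemma ord_ofK (T : {set S}) (P : point) : P \in fiber_prod T -> pt_of T (ord_of T P) = P.
Proof. by move=> PT; apply: (ord_of_inj (pt_of_in _) PT); rewrite pt_ofK. Qed.

Definition face_map (T T' : {set S}) (r : 'I_(last_rank T').+1) : 'I_(last_rank T).+1 :=
  ord_of T (restrict T (pt_of T' r)).
Arguments face_map : clear implicits.

Lemma face_mapE (T T' : {set S}) (P : point) : T \subset T' -> P \in fiber_prod T' ->
  face_map T T' (ord_of T' P) = ord_of T (restrict T P).
Proof. by move=> TT' PT'; rewrite /face_map ord_ofK. Qed.

Lemma face_map_hom (T T' : {set S}) : T \subset T' -> delta_hom (face_map T T').
Proof.
move=> TT' r r' rr'.
rewrite (ord_of_le (restrict_sub TT' (pt_of_in r)) (restrict_sub TT' (pt_of_in r'))).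
by apply: restrict_le; rewrite -(ord_of_le (pt_of_in r) (pt_of_in r')) !pt_ofK.
Qed.

Lemma face_map_id (T : {set S}) : face_map T T =1 id.
Proof. by move=> r; rewrite /face_map restrict_id ?pt_ofK ?pt_of_in. Qed.

Lemma face_map_comp (T T' T'' : {set S}) (r : 'I_(last_rank T'').+1) :
  T \subset T' -> T' \subset T'' -> face_map T T' (face_map T' T'' r) = face_map T T'' r.
Proof.
move=> TT' T'T''; rewrite /face_map ord_ofK ?restrict_restrict //.
exact: restrict_sub T'T'' (pt_of_in r).
Qed.

Definition cube_ob (T : {set S}) : nat := last_rank T.

Definition cube_mor (T T' : {set S}) : int -> int := delta_to_lam (face_map T T').

Lemma cube_lam_cube : lam_cube cube_ob cube_mor.
Proof.
split => [T T' TT'|T|T T' T'' TT' T'T''].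
- exact/delta_to_lam_hom/face_map_hom.
- by apply: lam_eq_refl => x; rewrite /cube_mor (delta_to_lam_eq (@face_map_id T)) delta_to_lam_id.
- apply: lam_eq_refl => x; rewrite /cube_mor /= -delta_to_lam_comp.
  by apply: delta_to_lam_eq => r; exact: face_map_comp.
Qed.

Definition base_point (y : 'I_n.+1) : point := (y, [ffun s => ord0]).

Definition claw_point (s : S) (j : 'I_(m s).+1) : point :=
  (f s j, [ffun u => if u == s then inord j else ord0]).

Lemma base_point_in (y : 'I_n.+1) : base_point y \in fiber_prod set0.
Proof. by apply/fiber_prodP => s; rewrite inE ffunE. Qed.

Lemma claw_point_s (s : S) (j : 'I_(m s).+1) : (claw_point j).2 s = j.
Proof. by rewrite ffunE eqxx inord_val. Qed.

Lemma claw_point_in (s : S) (j : 'I_(m s).+1) : claw_point j \in fiber_prod [set s].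
Proof.
apply/fiber_prodP => u; rewrite inE; have [->|us] := eqVneq u s; first by rewrite claw_point_s.
by rewrite ffunE (negbTE us).
Qed.

Lemma base_point_param :
  #|fiber_prod set0| = n.+1 /\ forall y, rank set0 (base_point y) = y.
Proof.
apply: (chain_rank_param point_le_refl) => [|i j]; last first.
  rewrite /point_le /=; apply/andP/idP => [[]//|ij]; split => //.
  by apply/forallP => s; rewrite !ffunE.
apply/setP => P; apply/idP/imsetP => [PT|[y _ ->]]; last exact: base_point_in.
exists P.1 => //; case: P PT => y F PT; congr pair; apply/ffunP => s.
by rewrite ffunE (fiber_prod_out PT) ?inE.
Qed.

Lemma claw_point_param (s : S) :
  #|fiber_prod [set s]| = (m s).+1 /\ forall j : 'I_(m s).+1, rank [set s] (claw_point j) = j.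
Proof.
apply: (chain_rank_param point_le_refl) => [|i j].
  apply/setP => P; apply/idP/imsetP => [PT|[j _ ->]]; last exact: claw_point_in.
  exists (P.2 s) => //; case: P PT => y F PT.
  rewrite /claw_point (fiber_prod_in PT (set11 s)); congr pair; apply/ffunP => u.
  rewrite ffunE; have [->|us] := eqVneq u s; first by rewrite inord_val.
  by rewrite (fiber_prod_out PT) // inE.
rewrite /point_le /=; apply/idP/idP => [/andP [_ /forallP /(_ s)]|ij].
  by rewrite !claw_point_s.
rewrite hf //=; apply/forallP => u; rewrite !ffunE; case: eqP => // ->.
by rewrite !inordK.
Qed.

Lemma last_rank0 : last_rank set0 = n.
Proof. by rewrite /last_rank (proj1 base_point_param). Qed.

Lemma last_rank1 (s : S) : last_rank [set s] = m s.
Proof. by rewrite /last_rank (proj1 (claw_point_param s)). Qed.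

Lemma face_map_claw (s : S) (j : 'I_(m s).+1) :
  (face_map set0 [set s] (inord j) : nat) = f s j.
Proof.
have ej : inord j = ord_of [set s] (claw_point j).
  apply: val_inj; rewrite /= ord_of_val ?claw_point_in // (proj2 (claw_point_param s)).
  by rewrite inordK // last_rank1.
rewrite ej face_mapE ?sub0set ?claw_point_in //.
have -> : restrict set0 (claw_point j) = base_point (f s j).
  by congr pair; apply/ffunP => u; rewrite !ffunE inE.
by rewrite ord_of_val ?base_point_in // (proj2 base_point_param).
Qed.

Lemma cube_extends_claw : extends_claw f cube_ob cube_mor.
Proof.
split => [|s]; first exact: last_rank0.
split; first exact: last_rank1.
apply: lam_eq_refl => x; apply/esym/delta_to_lam_cast; [exact: last_rank1 | exact: last_rank0 |].
exact: face_map_claw.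
Qed.

Section Face.
Variables (T : {set S}) (s s' : S).
Hypotheses (ss' : s != s') (sT : s \notin T) (s'T : s' \notin T).
Local Notation B := (s |: T).
Local Notation C := (s' |: T).
Local Notation A := (s |: (s' |: T)).

Lemma fiber_prod_joint_lift (PB PC : point) : PB \in fiber_prod B -> PC \in fiber_prod C ->
  restrict T PB = restrict T PC ->
  exists2 PA, PA \in fiber_prod A & restrict B PA = PB /\ restrict C PA = PC.
Proof.
move=> PBB PCC /restrict_eqP [e1 e2]; pose PA := restrict A (glue B PB PC).
have s'B : s' \notin B by rewrite !inE negb_or eq_sym ss'.
have PA_in : PA \in fiber_prod A.
  apply: restrict_fiber_prod => u; rewrite /= ffunE.
  case: ifPn => [/(fiber_prod_in PBB)//|uB]; rewrite e1 => /setU1P [us|/(fiber_prod_in PCC)//].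
  by move: uB; rewrite us !inE eqxx.
have BA : B \subset A by rewrite setUS ?subsetUr.
have CA : C \subset A by rewrite subsetUr.
exists PA => //; split; first by rewrite restrict_restrict // restrict_glue // restrict_id.
apply: (fiber_prod_eq (restrict_sub CA PA_in) PCC) => // u uC.
rewrite /= !ffunE uC (subsetP CA _ uC); case: ifPn => // uB; apply: e2.
by move: uB uC; rewrite !inE => /orP [/eqP ->|//]; rewrite (negbTE ss') (negbTE sT).
Qed.

Lemma fiber_prod_joint_inj (PA PA' : point) : PA \in fiber_prod A -> PA' \in fiber_prod A ->
  restrict B PA = restrict B PA' -> restrict C PA = restrict C PA' -> PA = PA'.
Proof.
move=> PAA PA'A /restrict_eqP [e1 eB] /restrict_eqP [_ eC].
apply: (fiber_prod_eq PAA PA'A e1) => u.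
by rewrite !inE => /or3P [us|us'|uT]; [apply: eB | apply: eC | apply: eB];
  rewrite !inE ?us ?us' ?uT ?orbT.
Qed.

Lemma fiber_prod_joint_surj (PD : point) : PD \in fiber_prod T ->
  (exists2 PB, PB \in fiber_prod B & restrict T PB = PD) \/
  (exists2 PC, PC \in fiber_prod C & restrict T PC = PD).
Proof.
move=> PDT; have /orP [/fiber_card1_image hit|/fiber_card1_image hit] := bc1_pair PD.1 ss'.
  by left; exact: fiber_prod_extend1 PDT hit.
by right; exact: fiber_prod_extend1 PDT hit.
Qed.

Lemma fiber_prod_fold (PB1 PB2 : point) : PB1 \in fiber_prod B -> PB2 \in fiber_prod B ->
  restrict T PB1 = restrict T PB2 -> PB1 != PB2 ->
  exists2 PC, PC \in fiber_prod C & restrict T PC = restrict T PB1.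
Proof.
move=> PB1B PB2B e12 neq; have [y12 eT] := restrict_eqP e12.
have sB : s \in B by rewrite setU11.
have s_neq : PB1.2 s != PB2.2 s.
  apply: contraNneq neq => es; apply/eqP; apply: (fiber_prod_eq PB1B PB2B y12) => u.
  by rewrite in_setU1 => /predU1P [->|/eT].
have s'_hit : in_image (f s') PB1.1.
  have /orP [s1|/fiber_card1_image //] := bc1_pair PB1.1 ss'.
  have := fiber_card1_inj s1 (fiber_prod_in PB1B sB) (etrans (fiber_prod_in PB2B sB) (esym y12)).
  by move/eqP; rewrite (negbTE s_neq).
exact: fiber_prod_extend1 (restrict_sub (subsetUr _ _) PB1B) s'_hit.
Qed.

(* Walk from [PB.1] towards [PC.1]: the first level hit by [f s'] is hit by all of A. *)
Lemma fiber_prod_gap (PB PC : point) (e : nat) :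
  PB \in fiber_prod B -> PC \in fiber_prod C -> ((PB.1 + e) %% n.+1 = PC.1)%N ->
  exists2 PA, PA \in fiber_prod A &
    [\/ restrict T PA = restrict T PB, restrict T PA = restrict T PC |
        exists2 d, (0 < d < e)%N & (PA.1 : nat) = ((PB.1 + d) %% n.+1)%N].
Proof.
move=> PBB PCC PBe.
have s'B : s' \notin B by rewrite !inE negb_or eq_sym ss'.
have B_hit : {in B, forall u, hits u PB.1} by move=> u /(fiber_prod_image PBB); rewrite hits_ord.
have s'_hit : hits s' (PB.1 + e) by rewrite /hits PBe (fiber_prod_image PCC) ?setU11.
have [d de A_hit] := walk_until_hit s'B B_hit s'_hit; rewrite setUCA in A_hit.
have BA : B \subset A by rewrite setUS ?subsetUr.
have CA : C \subset A by rewrite subsetUr.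
have [d0|d_pos] := posnP d.
  have PB_hit : {in A, forall u, in_image (f u) PB.1}.
    by move=> u /A_hit; rewrite d0 addn0 hits_ord.
  have [PA PAA PAB] := fiber_prod_extend BA PBB PB_hit.
  by exists PA => //; apply: Or31; rewrite -PAB restrict_restrict ?subsetUr.
have [de_eq|de_neq] := eqVneq d e.
  have PC_hit : {in A, forall u, in_image (f u) PC.1}.
    by move=> u /A_hit; rewrite de_eq /hits PBe.
  have [PA PAA PAC] := fiber_prod_extend CA PCC PC_hit.
  by exists PA => //; apply: Or32; rewrite -PAC restrict_restrict ?subsetUr.
have [PA PAA PAd] := fiber_prod_at_level (A_hit : {in A, forall u, in_image (f u)
  (Ordinal (ltn_pmod (PB.1 + d) (ltn0Sn n)))}).
exists PA => //; apply: Or33; exists d; last by rewrite PAd.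
by rewrite d_pos ltn_neqAle de_neq.
Qed.

Lemma fiber_prod_between (PB PC : point) : PB \in fiber_prod B -> PC \in fiber_prod C ->
  point_le (restrict T PB) (restrict T PC) ->
  exists2 PA, PA \in fiber_prod A &
    point_le (restrict T PB) (restrict T PA) && point_le (restrict T PA) (restrict T PC).
Proof.
move=> PBB PCC le_BC; have /andP [lvl _] := le_BC.
have PBe : ((PB.1 + (PC.1 - PB.1)) %% n.+1 = PC.1)%N by rewrite subnKC // modn_small.
have [PA PAA gap] := fiber_prod_gap PBB PCC PBe.
exists PA => //; case: gap => [->|->|[d /andP [d0 de] PAd]]; rewrite ?point_le_refl ?le_BC //.
have TA : T \subset A := subset_trans (subsetUr _ T) (subsetUr _ _).
have BT := restrict_sub (subsetUr _ _) PBB; have CT := restrict_sub (subsetUr _ _) PCC.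
have AT := restrict_sub TA PAA.
have PC_lt := ltn_ord PC.1.
have PAd' : (PA.1 : nat) = (PB.1 + d)%N by rewrite PAd modn_small //; clear -de PC_lt; lia.
by rewrite (point_le_level BT AT) ?(point_le_level AT CT) //= PAd'; clear -d0 de; lia.
Qed.

Lemma fiber_prod_wrap (PB PC : point) : PB \in fiber_prod B -> PC \in fiber_prod C ->
  exists2 PA, PA \in fiber_prod A &
    point_le (restrict T PB) (restrict T PA) || point_le (restrict T PA) (restrict T PC).
Proof.
move=> PBB PCC; have PB_lt := ltn_ord PB.1; have PC_lt := ltn_ord PC.1.
have PBe : ((PB.1 + (PC.1 + n.+1 - PB.1)) %% n.+1 = PC.1)%N.
  rewrite subnKC ?modnDr ?modn_small //.
  exact: leq_trans (ltnW PB_lt) (leq_addl _ _).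
have [PA PAA gap] := fiber_prod_gap PBB PCC PBe.
exists PA => //; case: gap => [->|->|[d /andP [d0 de] PAd]]; rewrite ?point_le_refl ?orbT //.
have TA : T \subset A := subset_trans (subsetUr _ T) (subsetUr _ _).
have BT := restrict_sub (subsetUr _ _) PBB; have CT := restrict_sub (subsetUr _ _) PCC.
have AT := restrict_sub TA PAA.
have [lt|ge] := ltnP (PB.1 + d) n.+1.
  by rewrite (point_le_level BT AT) //= PAd modn_small //; clear -d0; lia.
have PAd' : (PA.1 : nat) = (PB.1 + d - n.+1)%N.
  by rewrite PAd -{1}(subnK ge) modnDr modn_small //; clear -de PB_lt PC_lt; lia.
by rewrite (point_le_level AT CT) ?orbT //= PAd'; clear -de ge PB_lt; lia.
Qed.

End Face.

Lemma face_map_le (T U V : {set S}) (x : 'I_(last_rank U).+1) (y : 'I_(last_rank V).+1) :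
  T \subset U -> T \subset V ->
  (face_map T U x <= face_map T V y) = point_le (restrict T (pt_of U x)) (restrict T (pt_of V y)).
Proof. by move=> TU TV; rewrite ord_of_le // (restrict_sub _ (pt_of_in _)). Qed.

Lemma face_map_inj (T U V : {set S}) (x : 'I_(last_rank U).+1) (y : 'I_(last_rank V).+1) :
  T \subset U -> T \subset V -> face_map T U x = face_map T V y ->
  restrict T (pt_of U x) = restrict T (pt_of V y).
Proof. by move=> TU TV; apply: ord_of_inj; rewrite (restrict_sub _ (pt_of_in _)). Qed.

Section CubeFace.
Variables (T : {set S}) (s s' : S).
Hypotheses (ss' : s != s') (sT : s \notin T) (s'T : s' \notin T).
Local Notation B := (s |: T).
Local Notation C := (s' |: T).
Local Notation A := (s |: (s' |: T)).

Let s's : s' != s. Proof. by rewrite eq_sym. Qed.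
Let TB : T \subset B. Proof. exact: subsetUr. Qed.
Let TC : T \subset C. Proof. exact: subsetUr. Qed.
Let BA : B \subset A. Proof. by rewrite setUS ?subsetUr. Qed.
Let CA : C \subset A. Proof. exact: subsetUr. Qed.
Let TA : T \subset A. Proof. exact: subset_trans TB BA. Qed.

Let commute al : face_map T B (face_map B A al) = face_map T C (face_map C A al).
Proof. by rewrite !face_map_comp. Qed.

Let joint_lift be ga : face_map T B be = face_map T C ga ->
  exists al, face_map B A al = be /\ face_map C A al = ga.
Proof.
move=> /(face_map_inj TB TC) /(fiber_prod_joint_lift ss' sT s'T (pt_of_in _) (pt_of_in _)).
case=> PA PAA [PAB PAC]; exists (ord_of A PA).
by rewrite !face_mapE // PAB PAC !pt_ofK.
Qed.

Lemma cube_face_pullback :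
  lam_pullback (cube_ob A) (cube_ob B) (cube_ob C) (cube_ob T)
    (cube_mor B A) (cube_mor C A) (cube_mor T B) (cube_mor T C).
Proof.
apply: (delta_lam_pullback (face_map_hom BA) (face_map_hom CA) (face_map_hom TB)
  (face_map_hom TC) commute joint_lift) => al al'.
move=> /(face_map_inj BA BA) eB /(face_map_inj CA CA) eC.
by apply: (can_inj (@pt_ofK A)); exact: (fiber_prod_joint_inj (pt_of_in _) (pt_of_in _) eB eC).
Qed.

Lemma cube_face_pushout :
  lam_pushout (cube_ob A) (cube_ob B) (cube_ob C) (cube_ob T)
    (cube_mor B A) (cube_mor C A) (cube_mor T B) (cube_mor T C).
Proof.
have A' : s' |: (s |: T) = A by rewrite setUCA.
apply: (delta_lam_pushout (face_map_hom TB) (face_map_hom TC) commute joint_lift).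
- move=> de; case: (fiber_prod_joint_surj ss' (pt_of_in de)) => [[PB PBB e]|[PC PCC e]].
    by left; exists (ord_of B PB); rewrite face_mapE // e pt_ofK.
  by right; exists (ord_of C PC); rewrite face_mapE // e pt_ofK.
- move=> b1 b2 /(face_map_inj TB TB) e12 neq.
  have neq' : pt_of B b1 != pt_of B b2 by apply/eqP => /(can_inj (@pt_ofK B)).
  have [PC PCC e] := fiber_prod_fold ss' (pt_of_in b1) (pt_of_in b2) e12 neq'.
  by exists (ord_of C PC); rewrite face_mapE // e.
- move=> g1 g2 /(face_map_inj TC TC) e12 neq.
  have neq' : pt_of C g1 != pt_of C g2 by apply/eqP => /(can_inj (@pt_ofK C)).
  have [PB PBB e] := fiber_prod_fold s's (pt_of_in g1) (pt_of_in g2) e12 neq'.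
  by exists (ord_of B PB); rewrite face_mapE // e.
- move=> be ga /ltnW; rewrite face_map_le // => le.
  have [PA PAA] := fiber_prod_between ss' s'T (pt_of_in be) (pt_of_in ga) le.
  by exists (ord_of A PA); rewrite face_map_comp // !face_map_le // ord_ofK.
- move=> be ga; have [PA PAA] := fiber_prod_wrap ss' s'T (pt_of_in be) (pt_of_in ga).
  by exists (ord_of A PA); rewrite face_map_comp // !face_map_le // ord_ofK.
- move=> ga be /ltnW; rewrite face_map_le // => le.
  have [PA] := fiber_prod_between s's sT (pt_of_in ga) (pt_of_in be) le; rewrite A' => PAA.
  by exists (ord_of A PA); rewrite face_map_comp // !face_map_le // ord_ofK.
- move=> ga be; have [PA] := fiber_prod_wrap s's sT (pt_of_in ga) (pt_of_in be); rewrite A' => PAA.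
  by exists (ord_of A PA); rewrite face_map_comp // !face_map_le // ord_ofK.
Qed.

End CubeFace.

Lemma cyclically_compatible_cube :
  exists (ob : {set S} -> nat) (mor : {set S} -> {set S} -> int -> int),
    [/\ lam_cube ob mor, extends_claw f ob mor,
         strongly_cartesian ob mor & strongly_cocartesian ob mor].
Proof.
exists cube_ob, cube_mor; split; [exact: cube_lam_cube | exact: cube_extends_claw | |].
  by move=> T s s' ss' sT s'T; exact: cube_face_pullback.
by move=> T s s' ss' sT s'T; exact: cube_face_pushout.
Qed.

End Sufficiency.

Theorem proposition4p2p4 (S : finType) (n : nat) (m : S -> nat)
    (f : forall s : S, 'I_(m s).+1 -> 'I_n.+1)
    (hf : forall s : S, delta_hom (f s)) :
  (exists (ob : {set S} -> nat) (mor : {set S} -> {set S} -> int -> int),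
     [/\ lam_cube ob mor, extends_claw f ob mor,
         strongly_cartesian ob mor & strongly_cocartesian ob mor])
  <-> cyclically_compatible f.
Proof.
split; last exact: (cyclically_compatible_cube hf).
by move=> [ob [mor [cube ext SC SCC]]]; exact: (cube_cyclically_compatible hf cube ext SC SCC).
Qed.
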